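(* Let $\mathcal{A},\mathcal{B}\in\mathbb{S}^{[m,n]}$ with $\mathcal{B}$ positive definite, let $\lambda(x)=\mathcal{A}x^m/\mathcal{B}x^m$, $g(x)=\nabla\lambda(x)$, $\Omega=\mathbb{S}^{n-1}_+=\{x\in\mathbb{R}^n:x^Tx=1,x\ge0\}$, and let $P_\Omega$ be a Euclidean projection onto $\Omega$. Fix constants $\rho\in(0,1)$ and $0<\beta_{\min}\le\beta_{\max}$. Let $\{x_k\}$ be generated by the following algorithm (SPG1): choose $x_0\in\Omega$, $\beta_0=1/\|g(x_0)\|$; at iteration $k$, with $g_k=g(x_k)$: (1) compute $z_k=P_\Omega(x_k+\beta_k g_k)$ and $d_k=z_k-x_k$; (2) if $d_k=0$ stop; otherwise set $\alpha=1$; (3) while $\lambda(x_k+\alpha d_k)<\lambda(x_k)+\rho\alpha g_k^Td_k$, replace $\alpha$ by $\alpha/2$; then set $\alpha_k=\alpha$, $x_{k+1}=x_k+\alpha_kd_k$, $s_k=x_{k+1}-x_k$, $y_k=g_{k+1}-g_k$; (4) if $b_k=\langle s_k,y_k\rangle\le0$ set $\beta_{k+1}=\beta_{\max}$, else $\beta_{k+1}=\max\{\beta_{\min},\min\{\beta_{\max},\langle s_k,s_k\rangle/b_k\}\}$. Then: if the algorithm stops at some $x_k$ (i.e. $d_k=0$), $(\lambda(x_k),x_k)$ is a solution of the TEiCP for $(\mathcal{A},\mathcal{B})$; otherwise every accumulation point $x^*$ of $\{x_k\}$ is a constrained stationary point of the problem $\max\{\lambda(x):x\in\Omega\}$ (so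 that $(\lambda(x^* ),x^* )$ solves the TEiCP), and the sequence $\{\lambda(x_k)\}$ converges to a Pareto eigenvalue of $(\mathcal{A},\mathcal{B})$.
   Context: $\mathbb{S}^{[m,n]}$ is the set of real symmetric $m$th-order $n$-dimensional tensors; $(\mathcal{A}x^{m-1})_i=\sum_{i_2,\dots,i_m=1}^n a_{i i_2\cdots i_m}x_{i_2}\cdots x_{i_m}$, $\mathcal{A}x^m=x^T(\mathcal{A}x^{m-1})$; $\mathcal{B}$ positive definite means $\mathcal{B}x^m>0$ for $x\ne0$. The gradient is $g(x)=\frac{m}{\mathcal{B}x^m}\bigl(\mathcal{A}x^{m-1}-\lambda(x)\mathcal{B}x^{m-1}\bigr)$. The TEiCP for $(\mathcal{A},\mathcal{B})$ asks for $\lambda\in\mathbb{R}$ and $x\in\mathbb{R}^n\setminus\{0\}$ with $x\ge0$, $(\lambda\mathcal{B}-\mathcal{A})x^{m-1}\ge0$, $\langle x,(\lambda\mathcal{B}-\mathcal{A})x^{m-1}\rangle=0$; such $\lambda$ is a Pareto eigenvalue and $x$ a Pareto eigenvector. A constrained stationary point of $\max\{\lambda(x):x\in\Omega\}$ is a point $x\in\Omega$ satisfying the KKT conditions: there exist $\mu\in\mathbb{R}$, $v\in\mathbb{R}^n$ with $\nabla\lambda(x)+2\mu x+v=0$, $v\ge0$, $v^Tx=0$. *)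

From Stdlib Require Import Reals Lra Lia List Permutation.
Open Scope R_scope.

(* Vectors of R^n are represented as functions nat -> R; only the
   components with index < n are meaningful. *)
Definition vec := nat -> R.

(* An m-th order n-dimensional tensor: entries a_{i1...im} indexed by the
   list [i1;...;im]; only lists of length m with entries < n matter. *)
Definition tensor := list nat -> R.

Fixpoint sumR (n : nat) (f : nat -> R) : R :=
  match n with
  | O => 0
  | S k => sumR k f + f k
  end.

Fixpoint sum_idx (n k : nat) (F : list nat -> R) : R :=
  match k with
  | O => F nil
  | S k' => sumR n (fun j => sum_idx n k' (fun l => F (j :: l)))
  end.

Definition prodx (x : vec) (l : list nat) : R :=
  fold_right (fun j acc => x j * acc) 1 l.

Definition inner (n : nat) (u v : vec) : R := sumR n (fun i => u i * v i).
Definition vnorm (n : nat) (u : vec) : R := sqrt (inner n u u).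

Definition Txm (m n : nat) (A : tensor) (x : vec) : R :=
  sum_idx n m (fun l => A l * prodx x l).

Definition Txm1 (m n : nat) (A : tensor) (x : vec) : vec :=
  fun i => sum_idx n (m - 1) (fun l => A (i :: l) * prodx x l).

Definition symmetric_tensor (m n : nat) (A : tensor) : Prop :=
  forall l l', length l = m -> Forall (fun j => (j < n)%nat) l ->
    Permutation l l' -> A l = A l'.

Definition nonzero (n : nat) (x : vec) : Prop := exists i, (i < n)%nat /\ x i <> 0.
Definition vzero (n : nat) (x : vec) : Prop := forall i, (i < n)%nat -> x i = 0.

Definition pos_def (m n : nat) (B : tensor) : Prop :=
  forall x, nonzero n x -> Txm m n B x > 0.

Definition lam (m n : nat) (A B : tensor) (x : vec) : R := Txm m n A x / Txm m n B x.

Definition grad (m n : nat) (A B : tensor) (x : vec) : vec :=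
  fun i => (INR m / Txm m n B x) * (Txm1 m n A x i - lam m n A B x * Txm1 m n B x i).

Definition Omega (n : nat) (x : vec) : Prop :=
  inner n x x = 1 /\ forall i, (i < n)%nat -> 0 <= x i.

Definition is_proj (n : nat) (P : vec -> vec) : Prop :=
  forall y, Omega n (P y) /\
    forall z, Omega n z -> vnorm n (fun i => y i - P y i) <= vnorm n (fun i => y i - z i).

Definition TEiCP (m n : nat) (A B : tensor) (l : R) (x : vec) : Prop :=
  nonzero n x /\
  (forall i, (i < n)%nat -> 0 <= x i) /\
  (forall i, (i < n)%nat -> 0 <= l * Txm1 m n B x i - Txm1 m n A x i) /\
  inner n x (fun i => l * Txm1 m n B x i - Txm1 m n A x i) = 0.

Definition pareto_eigenvalue (m n : nat) (A B : tensor) (l : R) : Prop :=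
  exists x, TEiCP m n A B l x.

Definition constrained_stationary (m n : nat) (A B : tensor) (x : vec) : Prop :=
  Omega n x /\
  exists (mu : R) (v : vec),
    (forall i, (i < n)%nat -> grad m n A B x i + 2 * mu * x i + v i = 0) /\
    (forall i, (i < n)%nat -> 0 <= v i) /\
    inner n v x = 0.

Definition accumulation_point (n : nat) (xs : nat -> vec) (xstar : vec) : Prop :=
  exists phi : nat -> nat, (forall j, (phi j < phi (S j))%nat) /\
    forall i, (i < n)%nat -> Un_cv (fun j => xs (phi j) i) (xstar i).

Definition direction (m n : nat) (A B : tensor) (P : vec -> vec) (x : vec) (beta : R) : vec :=
  fun i => P (fun j => x j + beta * grad m n A B x j) i - x i.

(* Armijo test of step (3): the while loop stops at alpha when this holds *)
Definition armijo_ok (m n : nat) (A B : tensor) (rho : R) (x d : vec) (alpha : R) : Prop :=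
  lam m n A B (fun i => x i + alpha * d i) >= lam m n A B x + rho * alpha * inner n (grad m n A B x) d.

(* one iteration (steps (3),(4)) of SPG1 at index k, given d_k <> 0;
   alpha_k = (1/2)^(t k) where t k is the number of halvings *)
Definition SPG1_step (m n : nat) (A B : tensor) (P : vec -> vec) (rho bmin bmax : R)
  (x : nat -> vec) (beta : nat -> R) (t : nat -> nat) (k : nat) : Prop :=
  let d := direction m n A B P (x k) (beta k) in
  (armijo_ok m n A B rho (x k) d ((/2) ^ t k) /\
   forall s, (s < t k)%nat -> ~ armijo_ok m n A B rho (x k) d ((/2) ^ s)) /\
  (forall i, (i < n)%nat -> x (S k) i = x k i + (/2) ^ t k * d i) /\
  let s := fun i => x (S k) i - x k i in
  let y := fun i => grad m n A B (x (S k)) i - grad m n A B (x k) i in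
  let b := inner n s y in
  (b <= 0 -> beta (S k) = bmax) /\
  (b > 0 -> beta (S k) = Rmax bmin (Rmin bmax (inner n s s / b))).

Definition SPG1_generated (m n : nat) (A B : tensor) (P : vec -> vec) (rho bmin bmax : R)
  (x : nat -> vec) (beta : nat -> R) (t : nat -> nat) : Prop :=
  Omega n (x 0%nat) /\
  beta 0%nat = 1 / vnorm n (grad m n A B (x 0%nat)) /\
  forall k, (forall j, (j <= k)%nat -> ~ vzero n (direction m n A B P (x j) (beta j))) ->
    SPG1_step m n A B P rho bmin bmax x beta t k.

(* The Rayleigh quotient lambda is homogeneous of degree 0, so every iterate may be rescaled onto
   the sphere; the iterates themselves stay in the compact convex set Omega_hull (nonnegative vectors
   of norm <= 1 with coordinate sum >= 1), where B x^m is bounded below by some c > 0.  On that set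
   lambda has a second-order Taylor bound, which makes every rejected Armijo trial step bounded
   below, so the Armijo steps are uniformly large.  Since lambda is bounded above and increases by
   at least a multiple of the directional derivative D_k = <g_k, d_k> >= 0, the D_k are summable;
   the same estimate forces |x_k| -> 1.  Passing to the limit in the variational inequality of the
   projection at an accumulation point y gives b <g(y), w> <= 1 - <y, w> for all w in Omega,
   which forces g(y) <= 0 componentwise; with the Euler identity <g(x), x> = 0 this is exactly the
   KKT system and the TEiCP. *)

From Pilot Require Import Defs.
From Stdlib Require Import Reals List Permutation.
From Stdlib Require Import Lra Lia Psatz Rtopology ClassicalEpsilon Classical.
Open Scope R_scope.

(** * Finite sums and inner products *)

Lemma sumR_ext : forall n f g, (forall i, (i < n)%nat -> f i = g i) -> sumR n f = sumR n g.
Proof. induction n; intros f g H; simpl; auto. rewrite (IHn f g) by (intros; apply H; lia). rewrite H by lia; auto. Qed.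

Lemma sumR_add : forall n f g, sumR n (fun i => f i + g i) = sumR n f + sumR n g.
Proof. induction n; intros; simpl; [lra|]. rewrite IHn; lra. Qed.

Lemma sumR_sub : forall n f g, sumR n (fun i => f i - g i) = sumR n f - sumR n g.
Proof. induction n; intros; simpl; [lra|]. rewrite IHn; lra. Qed.

Lemma sumR_scal_l : forall n c f, sumR n (fun i => c * f i) = c * sumR n f.
Proof. induction n; intros; simpl; [lra|]. rewrite IHn; lra. Qed.

Lemma sumR_scal_r : forall n c f, sumR n (fun i => f i * c) = sumR n f * c.
Proof. induction n; intros; simpl; [lra|]. rewrite IHn; lra. Qed.

Lemma sumR_const0 : forall n, sumR n (fun _ => 0) = 0.
Proof. induction n; simpl; [lra|]. rewrite IHn; lra. Qed.

Lemma sumR_le : forall n f g, (forall i, (i < n)%nat -> f i <= g i) -> sumR n f <= sumR n g.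
Proof. induction n; intros f g H; simpl; [lra|]. pose proof (IHn f g ltac:(intros; apply H; lia)). pose proof (H n ltac:(lia)). lra. Qed.

Lemma sumR_ge0 : forall n f, (forall i, (i < n)%nat -> 0 <= f i) -> 0 <= sumR n f.
Proof. intros. rewrite <- (sumR_const0 n). apply sumR_le; auto. Qed.

Lemma sumR_abs_le : forall n f, Rabs (sumR n f) <= sumR n (fun i => Rabs (f i)).
Proof. induction n; intros; simpl. rewrite Rabs_R0; lra.
  pose proof (Rabs_triang (sumR n f) (f n)). pose proof (IHn f). lra. Qed.

Lemma sumR_swap : forall n p (f : nat -> nat -> R),
  sumR n (fun i => sumR p (fun j => f i j)) = sumR p (fun j => sumR n (fun i => f i j)).
Proof. induction n; intros; simpl. rewrite sumR_const0; auto.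
  rewrite IHn. rewrite <- sumR_add. auto. Qed.

Lemma sumR_term_le : forall n f j, (forall i, (i < n)%nat -> 0 <= f i) -> (j < n)%nat -> f j <= sumR n f.
Proof. induction n; intros f j H Hj; simpl; [lia|].
  destruct (Nat.eq_dec j n). subst. pose proof (sumR_ge0 n f ltac:(intros; apply H; lia)). lra.
  pose proof (IHn f j ltac:(intros; apply H; lia) ltac:(lia)). pose proof (H n ltac:(lia)). lra. Qed.

Lemma sumR_indicator : forall n j a, (j < n)%nat ->
  sumR n (fun i => if Nat.eq_dec i j then a else 0) = a.
Proof. induction n; intros j a Hj; simpl; [lia|].
  destruct (Nat.eq_dec n j). subst.
  rewrite (sumR_ext _ _ (fun _ => 0)). rewrite sumR_const0; lra.
  intros i Hi. destruct (Nat.eq_dec i j); [lia|auto].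
  rewrite IHn by lia. lra. Qed.

Lemma sq_le_mul_bound : forall N S0 Q a, 0 <= N -> 0 <= S0 -> 0 <= Q -> S0^2 <= N * Q ->
  2 * S0 * a <= Q + N * (a * a).
Proof. intros. destruct (Req_dec N 0). subst. assert (S0 = 0) by nra. subst. nra.
  assert (0 < N) by lra. pose proof (pow2_ge_0 (S0 - N*a)).
  assert (E: (S0 - N*a)^2 = S0^2 - 2*N*(S0*a) + N*(N*(a*a))) by ring.
  assert (2 * N * (S0 * a) <= N * (Q + N * (a*a))) by lra.
  apply Rmult_le_reg_l with N; nra. Qed.

Lemma sumR_abs_sq_le : forall n f, (sumR n (fun i => Rabs (f i)))^2 <= INR n * sumR n (fun i => f i * f i).
Proof. induction n; intros; simpl. lra.
  set (S0 := sumR n (fun i => Rabs (f i))). set (Q := sumR n (fun i => f i * f i)).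
  pose proof (IHn f) as IH. fold S0 Q in IH.
  assert (0 <= S0) by (apply sumR_ge0; intros; apply Rabs_pos).
  assert (0 <= Q) by (apply sumR_ge0; intros; nra).
  pose proof (Rabs_pos (f n)). assert (Rabs (f n) * Rabs (f n) = f n * f n) by (rewrite <- Rabs_mult; apply Rabs_pos_eq; nra).
  pose proof (pos_INR n).
  pose proof (sq_le_mul_bound (INR n) S0 Q (Rabs (f n)) H3 H H0 IH).
  rewrite <- H2 in *. destruct n; simpl in *; nra. Qed.

Lemma inner_comm : forall n u v, inner n u v = inner n v u.
Proof. intros. unfold inner. apply sumR_ext. intros; ring. Qed.

Lemma inner_ext : forall n u v u' v', (forall i, (i < n)%nat -> u i = u' i) -> (forall i, (i < n)%nat -> v i = v' i) ->
  inner n u v = inner n u' v'.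
Proof. intros. unfold inner. apply sumR_ext. intros. rewrite H, H0; auto. Qed.

Lemma inner_self_ge0 : forall n x, 0 <= inner n x x.
Proof. intros. apply sumR_ge0. intros. nra. Qed.

Lemma sq_le_inner_self : forall n x i, (i < n)%nat -> x i * x i <= inner n x x.
Proof. intros. apply (sumR_term_le n (fun i => x i * x i)); auto. intros; nra. Qed.

Lemma inner_lin_l : forall n a b u v w, inner n (fun i => a * u i + b * v i) w = a * inner n u w + b * inner n v w.
Proof. intros. unfold inner. rewrite (sumR_ext n _ (fun i => a * (u i * w i) + b * (v i * w i))) by (intros; ring).
  rewrite sumR_add, !sumR_scal_l. auto. Qed.

Lemma inner_sub_self : forall n y a, inner n (fun i => y i - a i) (fun i => y i - a i) = inner n y y - 2 * inner n y a + inner n a a.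
Proof. intros. unfold inner. rewrite (sumR_ext n _ (fun i => (y i * y i - 2 * (y i * a i)) + a i * a i)) by (intros; ring).
  rewrite sumR_add, sumR_sub, sumR_scal_l. auto. Qed.

Lemma inner_le_avg : forall n x z, 2 * inner n x z <= inner n x x + inner n z z.
Proof. intros. pose proof (inner_self_ge0 n (fun i => x i - z i)). rewrite inner_sub_self in H. lra. Qed.

Lemma inner_scal_l : forall n c u w, inner n (fun i => c * u i) w = c * inner n u w.
Proof. intros. unfold inner. rewrite <- sumR_scal_l. apply sumR_ext; intros; ring. Qed.

Lemma inner_unit_l : forall n j v, (j < n)%nat -> inner n (fun i => if Nat.eq_dec i j then 1 else 0) v = v j.
Proof. intros. unfold inner. rewrite (sumR_ext n _ (fun i => if Nat.eq_dec i j then v j else 0)).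
  apply sumR_indicator; auto. intros. destruct (Nat.eq_dec i j); subst; ring. Qed.

Lemma inner_add_scal_r : forall n u v c e, inner n u (fun i => v i + c * e i) = inner n u v + c * inner n u e.
Proof. intros. rewrite inner_comm. rewrite (inner_ext n _ u (fun i => 1 * v i + c * e i) u) by (intros; ring || auto).
  rewrite inner_lin_l. rewrite (inner_comm n v), (inner_comm n e). ring. Qed.

Lemma inner_add_scal_l : forall n a b c v, inner n (fun i => a i + c * b i) v = inner n a v + c * inner n b v.
Proof. intros. rewrite inner_comm, inner_add_scal_r, !(inner_comm n v). auto. Qed.

Lemma inner_sub_l : forall n a b v, inner n (fun i => a i - b i) v = inner n a v - inner n b v.
Proof. intros. rewrite (inner_ext n _ v (fun i => a i + (-1) * b i) v) by (intros; ring || auto). rewrite inner_add_scal_l. ring. Qed.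

Lemma inner_sub_r : forall n a b v, inner n v (fun i => a i - b i) = inner n v a - inner n v b.
Proof. intros. rewrite inner_comm, inner_sub_l, !(inner_comm n v). auto. Qed.

Lemma vnorm_eq0 : forall n g, vnorm n g = 0 -> forall i, (i < n)%nat -> g i = 0.
Proof. intros. unfold vnorm in H. apply sqrt_eq_0 in H; [|apply inner_self_ge0].
  pose proof (sq_le_inner_self n g i H0). assert (g i * g i = 0) by (pose proof (Rle_0_sqr (g i)); unfold Rsqr in *; lra). nra. Qed.

(** * Homogeneous forms *)

Definition hform (n k : nat) (T : tensor) (x : vec) : R := sum_idx n k (fun l => T l * prodx x l).
Definition coef_norm (n k : nat) (T : tensor) : R := sum_idx n k (fun l => Rabs (T l)).
Definition l1norm (n : nat) (h : vec) : R := sumR n (fun i => Rabs (h i)).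
Definition in_box (n : nat) (x : vec) : Prop := forall i, (i < n)%nat -> Rabs (x i) <= 1.

(* The derivative of [hform n k T] at [x] in the direction [h], by the product rule on the
   first index; for symmetric [T] it equals [k <h, T x^(k-1)>] (hform_deriv_symmetric). *)
Fixpoint hform_deriv (n k : nat) (T : tensor) (x h : vec) : R :=
  match k with
  | O => 0
  | S k' => sumR n (fun j => h j * hform n k' (fun l => T (j :: l)) x + x j * hform_deriv n k' (fun l => T (j :: l)) x h)
  end.

Lemma sum_idx_ext : forall n k F G,
  (forall l, length l = k -> Forall (fun j => (j < n)%nat) l -> F l = G l) ->
  sum_idx n k F = sum_idx n k G.
Proof. intros n k; induction k; intros F G H; simpl. apply H; auto.
  apply sumR_ext. intros i Hi. apply IHk. intros l Hl Hf. apply H; simpl; auto. Qed.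

Lemma sum_idx_scal : forall n k c F, sum_idx n k (fun l => c * F l) = c * sum_idx n k F.
Proof. intros n k; induction k; intros; simpl; auto.
  rewrite <- sumR_scal_l. apply sumR_ext. intros. apply IHk. Qed.

Lemma hform_S : forall n k T x, hform n (S k) T x = sumR n (fun j => x j * hform n k (fun l => T (j :: l)) x).
Proof. intros. unfold hform. simpl. apply sumR_ext. intros j Hj. rewrite <- sum_idx_scal.
  apply sum_idx_ext. intros. simpl. ring. Qed.

Lemma coef_norm_S : forall n k T, coef_norm n (S k) T = sumR n (fun j => coef_norm n k (fun l => T (j :: l))).
Proof. reflexivity. Qed.

Lemma coef_norm_ge0 : forall n k T, 0 <= coef_norm n k T.
Proof. intros n k; induction k; intros; [apply Rabs_pos|]. rewrite coef_norm_S. apply sumR_ge0; auto. Qed.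

Lemma coef_norm_slice_le : forall n k T j, (j < n)%nat -> coef_norm n k (fun l => T (j :: l)) <= coef_norm n (S k) T.
Proof. intros. rewrite coef_norm_S. apply (sumR_term_le n (fun j => coef_norm n k (fun l => T (j :: l)))); auto.
  intros; apply coef_norm_ge0. Qed.

Lemma l1norm_ge0 : forall n h, 0 <= l1norm n h.
Proof. intros; apply sumR_ge0; intros; apply Rabs_pos. Qed.

Lemma hform_ext : forall n k T x y, (forall i, (i < n)%nat -> x i = y i) -> hform n k T x = hform n k T y.
Proof. intros n k; induction k; intros T x y H. reflexivity.
  rewrite !hform_S. apply sumR_ext. intros. rewrite H by auto. f_equal. apply IHk; auto. Qed.

Lemma hform_ext_coef : forall n k T T' x, (forall l, length l = k -> Forall (fun j => (j < n)%nat) l -> T l = T' l) ->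
  hform n k T x = hform n k T' x.
Proof. intros. unfold hform. apply sum_idx_ext. intros. rewrite H; auto. Qed.

Lemma hform_scale : forall n k T x c, hform n k T (fun i => c * x i) = c ^ k * hform n k T x.
Proof. intros n k; induction k; intros. unfold hform; simpl; ring.
  rewrite !hform_S. rewrite <- sumR_scal_l. apply sumR_ext. intros. rewrite IHk. simpl. ring. Qed.

Lemma hform_bound : forall n k T x, in_box n x -> Rabs (hform n k T x) <= coef_norm n k T.
Proof. intros n k; induction k; intros T x Hx. unfold hform, coef_norm; simpl. rewrite Rmult_1_r; lra.
  rewrite hform_S, coef_norm_S. eapply Rle_trans. apply sumR_abs_le. apply sumR_le. intros j Hj.
  rewrite Rabs_mult. pose proof (Hx j Hj). pose proof (IHk (fun l => T (j :: l)) x Hx).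
  pose proof (Rabs_pos (x j)). pose proof (Rabs_pos (hform n k (fun l => T (j :: l)) x)). nra. Qed.

Lemma sum_weighted_slice_norms_le : forall n k T (h : vec),
  sumR n (fun j => Rabs (h j) * coef_norm n k (fun l => T (j :: l))) <= coef_norm n (S k) T * l1norm n h.
Proof. intros. unfold l1norm. rewrite Rmult_comm, <- sumR_scal_r. apply sumR_le. intros j Hj.
  pose proof (coef_norm_slice_le n k T j Hj). pose proof (Rabs_pos (h j)). nra. Qed.

Lemma sum_scaled_slice_norms : forall n k T c,
  sumR n (fun j => c * coef_norm n k (fun l => T (j :: l))) = c * coef_norm n (S k) T.
Proof. intros. rewrite sumR_scal_l. reflexivity. Qed.

Lemma hform_deriv_bound : forall n k T x h, in_box n x -> Rabs (hform_deriv n k T x h) <= INR k * coef_norm n k T * l1norm n h.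
Proof. intros n k; induction k; intros T x h Hx. simpl. rewrite Rabs_R0; lra.
  simpl hform_deriv. eapply Rle_trans. apply sumR_abs_le.
  eapply Rle_trans with (sumR n (fun j => Rabs (h j) * coef_norm n k (fun l => T (j :: l)) + (INR k * l1norm n h) * coef_norm n k (fun l => T (j :: l)))).
  apply sumR_le. intros j Hj.
  pose proof (hform_bound n k (fun l => T (j :: l)) x Hx). pose proof (IHk (fun l => T (j :: l)) x h Hx).
  pose proof (Hx j Hj). pose proof (Rabs_pos (h j)). pose proof (Rabs_pos (x j)).
  pose proof (Rabs_pos (hform_deriv n k (fun l => T (j :: l)) x h)).
  pose proof (coef_norm_ge0 n k (fun l => T (j :: l))). pose proof (l1norm_ge0 n h). pose proof (pos_INR k).
  eapply Rle_trans. apply Rabs_triang. rewrite !Rabs_mult. nra.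
  rewrite sumR_add, sum_scaled_slice_norms. pose proof (sum_weighted_slice_norms_le n k T h). rewrite S_INR. nra. Qed.

Lemma hform_lipschitz : forall n k T x y, in_box n x -> in_box n y ->
  Rabs (hform n k T y - hform n k T x) <= INR k * coef_norm n k T * l1norm n (fun i => y i - x i).
Proof. intros n k; induction k; intros T x y Hx Hy. simpl. unfold hform; simpl. replace (T nil * 1 - T nil * 1) with 0 by ring. rewrite Rabs_R0; lra.
  rewrite !hform_S. rewrite <- sumR_sub. eapply Rle_trans. apply sumR_abs_le.
  set (H := l1norm n (fun i => y i - x i)).
  eapply Rle_trans with (sumR n (fun j => Rabs (y j - x j) * coef_norm n k (fun l => T (j :: l)) + (INR k * H) * coef_norm n k (fun l => T (j :: l)))).
  apply sumR_le. intros j Hj.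
  replace (y j * hform n k (fun l => T (j :: l)) y - x j * hform n k (fun l => T (j :: l)) x) with
    ((y j - x j) * hform n k (fun l => T (j :: l)) y + x j * (hform n k (fun l => T (j :: l)) y - hform n k (fun l => T (j :: l)) x)) by ring.
  pose proof (hform_bound n k (fun l => T (j :: l)) y Hy). pose proof (IHk (fun l => T (j :: l)) x y Hx Hy). fold H in H1.
  pose proof (Hx j Hj). pose proof (Rabs_pos (y j - x j)). pose proof (Rabs_pos (x j)).
  pose proof (Rabs_pos (hform n k (fun l => T (j :: l)) y - hform n k (fun l => T (j :: l)) x)).
  pose proof (coef_norm_ge0 n k (fun l => T (j :: l))). pose proof (l1norm_ge0 n (fun i => y i - x i)). fold H in H7. pose proof (pos_INR k).
  eapply Rle_trans. apply Rabs_triang. rewrite !Rabs_mult.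
  assert (Rabs (y j - x j) * Rabs (hform n k (fun l => T (j :: l)) y) <= Rabs (y j - x j) * coef_norm n k (fun l => T (j :: l))) by (apply Rmult_le_compat_l; auto).
  assert (Rabs (x j) * Rabs (hform n k (fun l => T (j :: l)) y - hform n k (fun l => T (j :: l)) x) <= 1 * (INR k * coef_norm n k (fun l => T (j :: l)) * H)) by (apply Rmult_le_compat; auto).
  lra.
  rewrite sumR_add, sum_scaled_slice_norms. pose proof (sum_weighted_slice_norms_le n k T (fun i => y i - x i)). fold H in H0. rewrite S_INR. nra. Qed.

Lemma hform_taylor : forall n k T x y, in_box n x -> in_box n y ->
  Rabs (hform n k T y - hform n k T x - hform_deriv n k T x (fun i => y i - x i)) <=
    INR k * INR k * coef_norm n k T * (l1norm n (fun i => y i - x i))^2.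
Proof. intros n k; induction k; intros T x y Hx Hy. simpl. unfold hform; simpl. replace (T nil * 1 - T nil * 1 - 0) with 0 by ring. rewrite Rabs_R0; lra.
  rewrite !hform_S. simpl hform_deriv. rewrite <- !sumR_sub. eapply Rle_trans. apply sumR_abs_le.
  set (H := l1norm n (fun i => y i - x i)).
  eapply Rle_trans with (sumR n (fun j => (INR k * H) * (Rabs (y j - x j) * coef_norm n k (fun l => T (j :: l))) + (INR k * INR k * H^2) * coef_norm n k (fun l => T (j :: l)))).
  apply sumR_le. intros j Hj.
  set (Tj := (fun l => T (j :: l))).
  replace (y j * hform n k Tj y - x j * hform n k Tj x - ((y j - x j) * hform n k Tj x + x j * hform_deriv n k Tj x (fun i => y i - x i))) with
    ((y j - x j) * (hform n k Tj y - hform n k Tj x) + x j * (hform n k Tj y - hform n k Tj x - hform_deriv n k Tj x (fun i => y i - x i))) by ring.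
  pose proof (hform_lipschitz n k Tj x y Hx Hy). pose proof (IHk Tj x y Hx Hy). fold H in H0, H1.
  pose proof (Hx j Hj). pose proof (Rabs_pos (y j - x j)). pose proof (Rabs_pos (x j)).
  pose proof (Rabs_pos (hform n k Tj y - hform n k Tj x - hform_deriv n k Tj x (fun i => y i - x i))).
  pose proof (Rabs_pos (hform n k Tj y - hform n k Tj x)).
  pose proof (coef_norm_ge0 n k Tj). pose proof (l1norm_ge0 n (fun i => y i - x i)). fold H in H8. pose proof (pos_INR k).
  eapply Rle_trans. apply Rabs_triang. rewrite !Rabs_mult.
  assert (Rabs (y j - x j) * Rabs (hform n k Tj y - hform n k Tj x) <= Rabs (y j - x j) * (INR k * coef_norm n k Tj * H)) by (apply Rmult_le_compat_l; auto).
  assert (Rabs (x j) * Rabs (hform n k Tj y - hform n k Tj x - hform_deriv n k Tj x (fun i => y i - x i)) <= 1 * (INR k * INR k * coef_norm n k Tj * H ^ 2)) by (apply Rmult_le_compat; auto).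
  lra.
  rewrite sumR_add, sumR_scal_l, sum_scaled_slice_norms. pose proof (sum_weighted_slice_norms_le n k T (fun i => y i - x i)). fold H in H0.
  pose proof (l1norm_ge0 n (fun i => y i - x i)). fold H in H1. pose proof (pos_INR k). pose proof (coef_norm_ge0 n (S k) T).
  assert (INR k * H * sumR n (fun j => Rabs (y j - x j) * coef_norm n k (fun l => T (j :: l))) <= INR k * H * (coef_norm n (S k) T * H)).
  { apply Rmult_le_compat_l; auto. apply Rmult_le_pos; auto. }
  assert (0 <= coef_norm n (S k) T * H^2) by (apply Rmult_le_pos; auto; apply pow2_ge_0).
  rewrite S_INR. nra. Qed.

Lemma symmetric_slice : forall k n T j, symmetric_tensor (S k) n T -> (j < n)%nat -> symmetric_tensor k n (fun l => T (j :: l)).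
Proof. unfold symmetric_tensor. intros. apply H; simpl; auto. Qed.

Lemma symmetric_swap : forall k n T i j l, symmetric_tensor (S (S k)) n T -> (i < n)%nat -> (j < n)%nat ->
  length l = k -> Forall (fun j => (j < n)%nat) l -> T (j :: i :: l) = T (i :: j :: l).
Proof. unfold symmetric_tensor. intros. apply H; simpl; auto. constructor. Qed.

Lemma hform_deriv_symmetric : forall n k T x h, symmetric_tensor k n T ->
  hform_deriv n k T x h = INR k * sumR n (fun i => h i * hform n (k - 1) (fun l => T (i :: l)) x).
Proof. intros n k; induction k; intros T x h HT. simpl. ring.
  simpl hform_deriv. rewrite sumR_add.
  rewrite (sumR_ext n (fun j => x j * hform_deriv n k (fun l => T (j :: l)) x h)
     (fun j => x j * (INR k * sumR n (fun i => h i * hform n (k - 1) (fun l => T (j :: i :: l)) x)))).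
  2:{ intros j Hj. rewrite IHk; auto. apply symmetric_slice; auto. }
  destruct k. rewrite (sumR_ext n (fun j => x j * (INR 0 * sumR n (fun i => h i * hform n (0 - 1) (fun l => T (j :: i :: l)) x))) (fun _ => 0)) by (intros; simpl; ring). rewrite sumR_const0. simpl INR. replace (1 - 1)%nat with 0%nat by lia. ring.
  replace (S (S k) - 1)%nat with (S k) by lia. replace (S k - 1)%nat with k by lia.
  rewrite (sumR_ext n (fun j => x j * (INR (S k) * sumR n (fun i => h i * hform n k (fun l => T (j :: i :: l)) x)))
      (fun j => INR (S k) * sumR n (fun i => h i * (x j * hform n k (fun l => T (i :: j :: l)) x)))).
  2:{ intros j Hj. rewrite <- !sumR_scal_l. apply sumR_ext. intros i Hi.
      rewrite (hform_ext_coef n k (fun l => T (j :: i :: l)) (fun l => T (i :: j :: l))). ring.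
      intros. apply (symmetric_swap k n T); auto. }
  rewrite sumR_scal_l. rewrite sumR_swap.
  rewrite (sumR_ext n (fun j => sumR n (fun i => h j * (x i * hform n k (fun l => T (j :: i :: l)) x)))
      (fun j => h j * hform n (S k) (fun l => T (j :: l)) x)).
  2:{ intros j Hj. rewrite hform_S. rewrite <- sumR_scal_l. reflexivity. }
  rewrite (S_INR (S k)). ring. Qed.

(** * The Rayleigh quotient *)

Lemma Txm_hform : forall m n A x, Txm m n A x = hform n m A x.
Proof. reflexivity. Qed.
Lemma Txm1_hform : forall m n A x i, Txm1 m n A x i = hform n (m - 1) (fun l => A (i :: l)) x.
Proof. reflexivity. Qed.

Lemma Txm_Euler : forall m n A x, (1 <= m)%nat -> inner n x (Txm1 m n A x) = Txm m n A x.
Proof. intros. destruct m. lia. rewrite Txm_hform, hform_S. unfold inner. apply sumR_ext. intros.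
  rewrite Txm1_hform. replace (S m - 1)%nat with m by lia. reflexivity. Qed.

Lemma grad_orth : forall m n A B x, (1 <= m)%nat -> Txm m n B x <> 0 -> inner n (grad m n A B x) x = 0.
Proof. intros. unfold inner, grad.
  rewrite (sumR_ext n _ (fun i => (INR m / Txm m n B x) * (x i * Txm1 m n A x i - lam m n A B x * (x i * Txm1 m n B x i)))) by (intros; ring).
  rewrite sumR_scal_l, sumR_sub, sumR_scal_l.
  change (sumR n (fun i => x i * Txm1 m n A x i)) with (inner n x (Txm1 m n A x)).
  change (sumR n (fun i => x i * Txm1 m n B x i)) with (inner n x (Txm1 m n B x)).
  rewrite !Txm_Euler by auto. unfold lam. field. auto. Qed.

Lemma inner_grad : forall m n A B x h, inner n (grad m n A B x) h =
  (INR m / Txm m n B x) * (inner n h (Txm1 m n A x) - lam m n A B x * inner n h (Txm1 m n B x)).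
Proof. intros. unfold inner, grad.
  rewrite (sumR_ext n _ (fun i => (INR m / Txm m n B x) * (h i * Txm1 m n A x i - lam m n A B x * (h i * Txm1 m n B x i)))) by (intros; ring).
  rewrite sumR_scal_l, sumR_sub, sumR_scal_l. reflexivity. Qed.

Lemma hform_deriv_Txm : forall m n A x h, symmetric_tensor m n A -> hform_deriv n m A x h = INR m * inner n h (Txm1 m n A x).
Proof. intros. rewrite hform_deriv_symmetric by auto. reflexivity. Qed.

Lemma lam_ext : forall m n A B x y, (forall i, (i < n)%nat -> x i = y i) -> lam m n A B x = lam m n A B y.
Proof. intros. unfold lam, Txm. fold (hform n m A x) (hform n m B x) (hform n m A y) (hform n m B y).
  rewrite (hform_ext n m A x y), (hform_ext n m B x y); auto. Qed.

Lemma Txm_ext : forall m n A x y, (forall i, (i < n)%nat -> x i = y i) -> Txm m n A x = Txm m n A y.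
Proof. intros. rewrite !Txm_hform. apply hform_ext; auto. Qed.

Lemma Txm1_ext : forall m n A x y i, (forall i, (i < n)%nat -> x i = y i) -> Txm1 m n A x i = Txm1 m n A y i.
Proof. intros. rewrite !Txm1_hform. apply hform_ext; auto. Qed.

Lemma grad_ext : forall m n A B x y i, (forall i, (i < n)%nat -> x i = y i) -> grad m n A B x i = grad m n A B y i.
Proof. intros. unfold grad. rewrite (Txm_ext m n B x y), (Txm1_ext m n A x y), (Txm1_ext m n B x y), (lam_ext m n A B x y); auto. Qed.

Lemma Txm_scale : forall m n A x c, Txm m n A (fun i => c * x i) = c ^ m * Txm m n A x.
Proof. intros. rewrite !Txm_hform. apply hform_scale. Qed.
Lemma Txm1_scale : forall m n A x c i, Txm1 m n A (fun i => c * x i) i = c ^ (m - 1) * Txm1 m n A x i.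
Proof. intros. rewrite !Txm1_hform. apply hform_scale. Qed.

Lemma lam_scale : forall m n A B x c, c <> 0 -> lam m n A B (fun i => c * x i) = lam m n A B x.
Proof. intros. unfold lam. rewrite !Txm_scale. destruct (Req_dec (Txm m n B x) 0).
  rewrite H0. rewrite Rmult_0_r. unfold Rdiv. rewrite Rinv_0. ring.
  field. split; auto. apply pow_nonzero; auto. Qed.

Lemma grad_scale : forall m n A B x c i, (1 <= m)%nat -> c <> 0 -> Txm m n B x <> 0 ->
  grad m n A B (fun i => c * x i) i = grad m n A B x i / c.
Proof. intros. unfold grad. rewrite lam_scale by auto. rewrite !Txm_scale, !Txm1_scale.
  destruct m. lia. replace (S m - 1)%nat with m by lia. simpl pow. field. split; auto. split; auto. apply pow_nonzero; auto. Qed.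

Lemma Rabs_mul3_le : forall a b c A B C, Rabs a <= A -> Rabs b <= B -> Rabs c <= C -> Rabs (a * b * c) <= A * B * C.
Proof. intros. rewrite !Rabs_mult. pose proof (Rabs_pos a). pose proof (Rabs_pos b). pose proof (Rabs_pos c).
  apply Rmult_le_compat; try apply Rmult_le_pos; auto. apply Rmult_le_compat; auto. Qed.

Lemma Rabs_sub3_add_le : forall a b c d, Rabs (a - b - c + d) <= Rabs a + Rabs b + Rabs c + Rabs d.
Proof. intros. unfold Rminus. eapply Rle_trans. apply Rabs_triang. eapply Rle_trans. apply Rplus_le_compat_r. apply Rabs_triang.
  eapply Rle_trans. apply Rplus_le_compat_r. apply Rplus_le_compat_r. apply Rabs_triang. rewrite !Rabs_Ropp. lra. Qed.

Lemma quotient_taylor_bound : forall p q p' q' Lp Lq MA MB Hh c M,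
  Rabs p <= MA -> Rabs q <= MB -> 0 < c -> c <= q -> c <= q' ->
  Rabs Lp <= M * MA * Hh -> Rabs (p' - p - Lp) <= M * M * MA * Hh^2 ->
  Rabs (q' - q) <= M * MB * Hh -> Rabs (q' - q - Lq) <= M * M * MB * Hh^2 -> Rabs Lq <= M * MB * Hh ->
  Rabs (p' / q' - p / q - (Lp - p / q * Lq) / q) <= 4 * M^2 * MA * MB^2 / c^3 * Hh^2.
Proof. intros p q p' q' Lp Lq MA MB Hh c M Hp Hq Hc Hcq Hcq' HLp HRp Hdq HRq HLq.
  assert (E : p' / q' - p / q - (Lp - p / q * Lq) / q =
    ((p' - p - Lp) * q * q - p * q * (q' - q - Lq) - Lp * q * (q' - q) + p * Lq * (q' - q)) / (q' * q^2)).
  { field. split; lra. }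
  rewrite E. clear E.
  set (N := (p' - p - Lp) * q * q - p * q * (q' - q - Lq) - Lp * q * (q' - q) + p * Lq * (q' - q)).
  assert (HN : Rabs N <= 4 * M^2 * MA * MB^2 * Hh^2).
  { unfold N. pose proof (Rabs_mul3_le _ _ _ _ _ _ HRp Hq Hq). pose proof (Rabs_mul3_le _ _ _ _ _ _ Hp Hq HRq).
    pose proof (Rabs_mul3_le _ _ _ _ _ _ HLp Hq Hdq). pose proof (Rabs_mul3_le _ _ _ _ _ _ Hp HLq Hdq).
    eapply Rle_trans. apply Rabs_sub3_add_le. lra. }
  assert (0 < q' * q^2) by (apply Rmult_lt_0_compat; nra).
  assert (c^3 <= q' * q^2). { assert (c * c <= q * q) by nra. simpl. nra. }
  unfold Rdiv. rewrite Rabs_mult. rewrite Rabs_inv. rewrite (Rabs_pos_eq (q' * q^2)) by lra.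
  assert (0 < c^3) by (apply pow_lt; auto).
  assert (/ (q' * q^2) <= / c^3) by (apply Rinv_le_contravar; auto).
  pose proof (Rabs_pos N).
  assert (Rabs N * / (q' * q^2) <= (4 * M^2 * MA * MB^2 * Hh^2) * / c^3).
  { apply Rmult_le_compat; auto. left; apply Rinv_0_lt_compat; auto. }
  replace (4 * M ^ 2 * MA * MB ^ 2 * / c ^ 3 * Hh ^ 2) with (4 * M ^ 2 * MA * MB ^ 2 * Hh ^ 2 * / c ^ 3) by ring. auto. Qed.

Definition lam_curv (m n : nat) (A B : tensor) (c : R) : R :=
  4 * INR m ^ 2 * coef_norm n m A * coef_norm n m B ^ 2 / c ^ 3.

Lemma lam_curv_ge0 : forall m n A B c, 0 < c -> 0 <= lam_curv m n A B c.
Proof. intros. unfold lam_curv. pose proof (coef_norm_ge0 n m A). pose proof (coef_norm_ge0 n m B). pose proof (pos_INR m).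
  apply Rmult_le_pos. repeat apply Rmult_le_pos; try lra; apply pow_le; lra. left; apply Rinv_0_lt_compat, pow_lt; auto. Qed.

Lemma lam_taylor : forall m n A B x y c, symmetric_tensor m n A -> symmetric_tensor m n B ->
  in_box n x -> in_box n y -> 0 < c -> c <= Txm m n B x -> c <= Txm m n B y ->
  Rabs (lam m n A B y - lam m n A B x - inner n (grad m n A B x) (fun i => y i - x i))
    <= lam_curv m n A B c * (l1norm n (fun i => y i - x i))^2.
Proof. intros m n A B x y c HA HB Hx Hy Hc Hcx Hcy.
  set (h := fun i => y i - x i).
  rewrite inner_grad.
  pose proof (hform_deriv_Txm m n A x h HA) as LA. pose proof (hform_deriv_Txm m n B x h HB) as LB.
  assert (Eg : INR m / Txm m n B x * (inner n h (Txm1 m n A x) - lam m n A B x * inner n h (Txm1 m n B x))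
     = (hform_deriv n m A x h - Txm m n A x / Txm m n B x * hform_deriv n m B x h) / Txm m n B x).
  { rewrite LA, LB. unfold lam. field. lra. }
  rewrite Eg. unfold lam. unfold lam_curv.
  apply quotient_taylor_bound; rewrite ?Txm_hform; auto.
  - apply hform_bound; auto.
  - apply hform_bound; auto.
  - apply hform_deriv_bound; auto.
  - apply hform_taylor; auto.
  - apply hform_lipschitz; auto.
  - apply hform_taylor; auto.
  - apply hform_deriv_bound; auto.
Qed.

Lemma lam_le : forall m n A B x c, in_box n x -> 0 < c -> c <= Txm m n B x -> lam m n A B x <= coef_norm n m A / c.
Proof. intros. unfold lam. pose proof (hform_bound n m A x H). rewrite <- Txm_hform in H2.
  assert (Txm m n A x <= coef_norm n m A) by (pose proof (Rle_abs (Txm m n A x)); lra).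
  pose proof (coef_norm_ge0 n m A).
  unfold Rdiv. apply Rle_trans with (coef_norm n m A * / Txm m n B x).
  apply Rmult_le_compat_r; auto. left; apply Rinv_0_lt_compat; lra.
  apply Rmult_le_compat_l; auto. apply Rinv_le_contravar; auto. Qed.

(** * Sequences *)

Lemma incr_seq_ge_id : forall phi : nat -> nat, (forall j, (phi j < phi (S j))%nat) -> forall j, (j <= phi j)%nat.
Proof. intros phi H j. induction j. lia. specialize (H j). lia. Qed.

Lemma incr_seq_le : forall phi : nat -> nat, (forall j, (phi j < phi (S j))%nat) -> forall i j, (i <= j)%nat -> (phi i <= phi j)%nat.
Proof. intros phi H i j Hij. induction Hij. lia. specialize (H m). lia. Qed.

Lemma cv_subseq : forall u l (phi : nat -> nat), (forall j, (phi j < phi (S j))%nat) -> Un_cv u l -> Un_cv (fun j => u (phi j)) l.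
Proof. intros u l phi Hphi Hu eps Heps. destruct (Hu eps Heps) as [N HN]. exists N. intros j Hj.
  apply HN. pose proof (incr_seq_ge_id phi Hphi j). lia. Qed.

Lemma cv_const : forall c, Un_cv (fun _ => c) c.
Proof. intros c eps He. exists 0%nat. intros. unfold R_dist. replace (c - c) with 0 by ring. rewrite Rabs_R0; auto. Qed.

Lemma cv_shift : forall u l, Un_cv u l -> Un_cv (fun j => u (S j)) l.
Proof. intros u l H eps He. destruct (H eps He) as [N HN]. exists N. intros. apply HN. lia. Qed.

Lemma cv_dominated : forall (a b : nat -> R) l C, Un_cv a 0 -> (forall j, Rabs (b j - l) <= C * a j) -> Un_cv b l.
Proof. intros a b l C Ha Hb eps He.
  destruct (Ha (eps / (Rabs C + 1))) as [N HN]. apply Rdiv_lt_0_compat; auto. pose proof (Rabs_pos C); lra.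
  exists N. intros j Hj. specialize (HN j Hj). unfold R_dist in *. rewrite Rminus_0_r in HN.
  specialize (Hb j). pose proof (Rabs_pos C). pose proof (Rle_abs C).
  assert (C * a j <= Rabs C * Rabs (a j)). { rewrite <- Rabs_mult. apply Rle_abs. }
  assert (Rabs (a j) * (Rabs C + 1) < eps). { apply Rmult_lt_reg_r with (/ (Rabs C + 1)). apply Rinv_0_lt_compat; lra.
     rewrite Rmult_assoc, Rinv_r by lra. rewrite Rmult_1_r. auto. }
  pose proof (Rabs_pos (a j)). nra. Qed.

Lemma cv_sumR : forall n (f : nat -> nat -> R) (l : nat -> R),
  (forall i, (i < n)%nat -> Un_cv (fun j => f j i) (l i)) -> Un_cv (fun j => sumR n (f j)) (sumR n l).
Proof. induction n; intros f l H. simpl. apply cv_const.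
  simpl. apply CV_plus. apply IHn. intros; apply H; lia. apply H; lia. Qed.

Lemma cv_abs_dist0 : forall u l, Un_cv u l -> Un_cv (fun j => Rabs (u j - l)) 0.
Proof. intros u l H eps He. destruct (H eps He) as [N HN]. exists N. intros j Hj. specialize (HN j Hj).
  unfold R_dist in *. rewrite Rminus_0_r, Rabs_Rabsolu. auto. Qed.

Lemma cv_l1norm_dist : forall n (xs : nat -> vec) xstar, (forall i, (i < n)%nat -> Un_cv (fun j => xs j i) (xstar i)) ->
  Un_cv (fun j => l1norm n (fun i => xs j i - xstar i)) 0.
Proof. intros. unfold l1norm. rewrite <- (sumR_const0 n). apply cv_sumR. intros. apply cv_abs_dist0. auto. Qed.

Lemma cv_hform : forall n k T (xs : nat -> vec) xstar, (forall j, in_box n (xs j)) -> in_box n xstar ->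
  (forall i, (i < n)%nat -> Un_cv (fun j => xs j i) (xstar i)) ->
  Un_cv (fun j => hform n k T (xs j)) (hform n k T xstar).
Proof. intros. apply cv_dominated with (a := fun j => l1norm n (fun i => xs j i - xstar i)) (C := INR k * coef_norm n k T).
  apply cv_l1norm_dist; auto. intros. apply (hform_lipschitz n k T xstar (xs j)); auto. Qed.

Lemma cv_inv : forall u l, l <> 0 -> Un_cv u l -> Un_cv (fun j => / u j) (/ l).
Proof. intros. apply (continuity_seq (fun x => / x) u l); auto.
  apply (continuity_pt_inv (fun x => x)); auto. apply derivable_continuous_pt. apply derivable_pt_id. Qed.

Lemma cv_div : forall u v lu lv, lv <> 0 -> Un_cv u lu -> Un_cv v lv -> Un_cv (fun j => u j / v j) (lu / lv).
Proof. intros. unfold Rdiv. apply CV_mult; auto. apply cv_inv; auto. Qed.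

Lemma cv_ge_const : forall u l c, Un_cv u l -> (forall j, c <= u j) -> c <= l.
Proof. intros. apply (Rle_cv_lim (Un:=fun _ => c) (Vn:=u)); auto. apply cv_const. Qed.

Lemma cv_le_const : forall u l c, Un_cv u l -> (forall j, u j <= c) -> l <= c.
Proof. intros. apply (Rle_cv_lim (Un:=u) (Vn:=fun _ => c)); auto. apply cv_const. Qed.

Lemma cv0_of_bounded_partial_sums : forall (D : nat -> R) M, (forall k, 0 <= D k) -> (forall N, sumR N D <= M) -> Un_cv D 0.
Proof. intros D M HD HM.
  assert (Hg : Un_growing (fun N => sumR N D)). { intros N. simpl. pose proof (HD N). lra. }
  assert (Hb : has_ub (fun N => sumR N D)). { exists M. intros x [N HN]. subst. auto. }
  destruct (growing_cv _ Hg Hb) as [l Hl].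
  pose proof (CV_minus _ _ _ _ (cv_shift _ _ Hl) Hl). simpl in H.
  replace 0 with (l - l) by ring.
  intros eps He. destruct (H eps He) as [N HN]. exists N. intros j Hj. specialize (HN j Hj).
  replace (D j) with (sumR j D + D j - sumR j D) by ring. auto. Qed.

Lemma bolzano_weierstrass_01 : forall u : nat -> R, (forall k, 0 <= u k <= 1) ->
  exists (phi : nat -> nat) l, (forall j, (phi j < phi (S j))%nat) /\ Un_cv (fun j => u (phi j)) l.
Proof. intros u Hu. destruct (Bolzano_Weierstrass u (fun c => 0 <= c <= 1) (compact_P3 0 1) Hu) as [l Hl].
  assert (Hex : forall N j : nat, exists p, (N <= p)%nat /\ Rabs (u p - l) < / INR (S j)).
  { intros N j. assert (Hpos : 0 < / INR (S j)) by (apply Rinv_0_lt_compat; apply lt_0_INR; lia).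
    destruct (Hl (disc l (mkposreal _ Hpos)) N) as [p [Hp1 Hp2]].
    exists (mkposreal _ Hpos). intros y Hy. auto. exists p. split; auto. }
  set (F := fun N j => proj1_sig (constructive_indefinite_description _ (Hex N j))).
  assert (HF : forall N j, (N <= F N j)%nat /\ Rabs (u (F N j) - l) < / INR (S j)).
  { intros. unfold F. destruct (constructive_indefinite_description _ (Hex N j)). simpl. auto. }
  set (phi := fix phi j := match j with O => F O O | S j' => F (S (phi j')) (S j') end).
  exists phi, l. split.
  - intros j. simpl. destruct (HF (S (phi j)) (S j)). lia.
  - intros eps He. destruct (INR_archimed eps 1 He) as [N HN]. exists N. intros j Hj.
    unfold R_dist.
    assert (Rabs (u (phi j) - l) < / INR (S j)). { destruct j; simpl; apply HF. }
    assert (/ INR (S j) <= / INR (S N)). { apply Rinv_le_contravar. apply lt_0_INR; lia. apply le_INR; lia. }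
    assert (/ INR (S N) < eps). { rewrite S_INR. apply Rmult_lt_reg_r with (INR N + 1). pose proof (pos_INR N); lra.
      rewrite Rinv_l by (pose proof (pos_INR N); lra). nra. }
    lra. Qed.

Lemma bolzano_weierstrass_box : forall n (xs : nat -> vec), (forall j i, (i < n)%nat -> 0 <= xs j i <= 1) ->
  forall k, (k <= n)%nat -> exists (phi : nat -> nat) (xstar : vec), (forall j, (phi j < phi (S j))%nat) /\
    forall i, (i < k)%nat -> Un_cv (fun j => xs (phi j) i) (xstar i).
Proof. intros n xs Hb k. induction k; intros Hk.
  - exists (fun j => j), (fun _ => 0). split. intros; lia. intros; lia.
  - destruct (IHk ltac:(lia)) as [phi [xstar [Hphi Hcv]]].
    destruct (bolzano_weierstrass_01 (fun j => xs (phi j) k)) as [psi [l [Hpsi Hl]]]. intros; apply Hb; lia.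
    exists (fun j => phi (psi j)), (fun i => if Nat.eq_dec i k then l else xstar i). split.
    + intros j. pose proof (incr_seq_le phi Hphi (S (psi j)) (psi (S j)) (Hpsi j)). specialize (Hphi (psi j)). lia.
    + intros i Hi. destruct (Nat.eq_dec i k). subst. auto.
      apply (cv_subseq (fun j => xs (phi j) i) (xstar i) psi Hpsi). apply Hcv. lia. Qed.

(** * A compact convex set containing the constraint set *)

Definition Omega_hull (n : nat) (x : vec) : Prop :=
  (forall i, (i < n)%nat -> 0 <= x i) /\ inner n x x <= 1 /\ 1 <= sumR n x.

Lemma Omega_hull_box : forall n x, Omega_hull n x -> in_box n x.
Proof. intros n x [H1 [H2 H3]] i Hi. pose proof (sq_le_inner_self n x i Hi). pose proof (H1 i Hi).
  rewrite Rabs_pos_eq by auto. nra. Qed.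

Lemma Omega_in_hull : forall n x, Omega n x -> Omega_hull n x.
Proof. intros n x [H1 H2]. split; auto. split. lra.
  rewrite <- H1. apply sumR_le. intros i Hi. pose proof (sq_le_inner_self n x i Hi). pose proof (H2 i Hi). nra. Qed.

Lemma nonzero_of_sum_ge1 : forall n x, 1 <= sumR n x -> Defs.nonzero n x.
Proof. intros. apply NNPP. intro l1norm. assert (sumR n x = 0).
  { rewrite <- (sumR_const0 n). apply sumR_ext. intros. apply NNPP. intro. apply l1norm. exists i. auto. }
  lra. Qed.

Lemma Omega_hull_nonzero : forall n x, Omega_hull n x -> Defs.nonzero n x.
Proof. intros n x [_ [_ H]]. apply nonzero_of_sum_ge1; auto. Qed.

Lemma Omega_hull_dim_pos : forall n x, Omega_hull n x -> (1 <= n)%nat.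
Proof. intros n x [_ [_ H]]. destruct n. simpl in H. lra. lia. Qed.

Lemma Omega_hull_norm_lower : forall n x, Omega_hull n x -> 1 <= INR n * inner n x x.
Proof. intros n x [H1 [H2 H3]]. pose proof (sumR_abs_sq_le n x).
  rewrite (sumR_ext n (fun i => Rabs (x i)) x) in H by (intros; apply Rabs_pos_eq; auto).
  change (sumR n (fun i => x i * x i)) with (inner n x x) in H. nra. Qed.

Lemma Omega_hull_normalize : forall n x, Omega_hull n x ->
  let r := sqrt (inner n x x) in
  0 < r <= 1 /\ r * r = inner n x x /\ 1 <= INR n * r /\ Omega n (fun i => / r * x i).
Proof. intros n x Hx r.
  pose proof (Omega_hull_norm_lower n x Hx) as HX. destruct Hx as [Hx0 [HX1 _]].
  set (X := inner n x x) in *. pose proof (pos_INR n).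
  assert (0 < X) by (destruct (Rle_lt_dec X 0); auto; nra).
  assert (Hrr : r * r = X) by (apply sqrt_sqrt; lra).
  assert (Hr : 0 < r) by (apply sqrt_lt_R0; auto).
  split; [split; nra|]. split; [auto|]. split; [nra|]. split.
  - rewrite inner_scal_l, inner_comm, inner_scal_l. fold X. rewrite <- Hrr. field. lra.
  - intros i Hi. apply Rmult_le_pos; [left; apply Rinv_0_lt_compat; auto | apply Hx0; auto]. Qed.

Lemma Omega_hull_segment : forall n x z a, Omega_hull n x -> Omega n z -> 0 <= a <= 1 -> Omega_hull n (fun i => x i + a * (z i - x i)).
Proof. intros n x z a [Hx1 [Hx2 Hx3]] [Hz1 Hz2] Ha. split; [|split].
  - intros i Hi. pose proof (Hx1 i Hi). pose proof (Hz2 i Hi). nra.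
  - rewrite (inner_ext n _ _ (fun i => (1 - a) * x i + a * z i) (fun i => (1 - a) * x i + a * z i)) by (intros; ring).
    rewrite inner_lin_l. rewrite (inner_comm n x), (inner_comm n z). rewrite !inner_lin_l. rewrite (inner_comm n z x) in *.
    pose proof (inner_le_avg n x z). set (X := inner n x x) in *. set (XZ := inner n x z) in *.
    assert (a*(1-a)*(2*XZ) <= a*(1-a)*(X+1)) by (apply Rmult_le_compat_l; nra).
    assert (0 <= (1-a)*(1-a)) by nra. rewrite Hz1. nra.
  - rewrite (sumR_ext n _ (fun i => (1 - a) * x i + a * z i)) by (intros; ring). rewrite sumR_add, !sumR_scal_l.
    pose proof (Omega_in_hull n z (conj Hz1 Hz2)) as [_ [_ Hz3]]. nra. Qed.

Lemma Omega_hull_ext : forall n x y, (forall i, (i < n)%nat -> x i = y i) -> Omega_hull n x -> Omega_hull n y.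
Proof. intros n x y H [H1 [H2 H3]]. split; [|split].
  intros. rewrite <- H; auto. rewrite <- (inner_ext n x x y y); auto.
  rewrite <- (sumR_ext n x y); auto. Qed.

Lemma Omega_hull_closed : forall n (xs : nat -> vec) xstar, (forall j, Omega_hull n (xs j)) ->
  (forall i, (i < n)%nat -> Un_cv (fun j => xs j i) (xstar i)) -> Omega_hull n xstar.
Proof. intros n xs xstar HK Hcv. split; [|split].
  - intros i Hi. apply (cv_ge_const _ _ 0 (Hcv i Hi)). intros j. apply (HK j); auto.
  - apply (cv_le_const (fun j => inner n (xs j) (xs j))). unfold inner. apply cv_sumR. intros. apply CV_mult; auto.
    intros j. apply (HK j).
  - apply (cv_ge_const (fun j => sumR n (xs j))). apply cv_sumR; auto. intros j. apply (HK j). Qed.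

Lemma pos_def_hull_lower_bound : forall m n B, pos_def m n B -> exists c, 0 < c /\ forall x, Omega_hull n x -> c <= Txm m n B x.
Proof. intros m n B HB. apply NNPP. intro Hne.
  assert (Hex : forall j : nat, exists x, Omega_hull n x /\ Txm m n B x < / INR (S j)).
  { intros j. apply NNPP. intro H. apply Hne. exists (/ INR (S j)). split. apply Rinv_0_lt_compat, lt_0_INR; lia.
    intros x Hx. apply Rnot_lt_le. intro. apply H. exists x. auto. }
  set (xs := fun j => proj1_sig (constructive_indefinite_description _ (Hex j))).
  assert (Hxs : forall j, Omega_hull n (xs j) /\ Txm m n B (xs j) < / INR (S j)).
  { intros. unfold xs. destruct (constructive_indefinite_description _ (Hex j)). auto. }
  destruct (bolzano_weierstrass_box n xs) with (k := n) as [phi [xstar [Hphi Hcv]]]; auto.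
  { intros j i Hi. destruct (Hxs j) as [HK _]. pose proof (Omega_hull_box n _ HK i Hi). destruct HK as [HK _]. pose proof (HK i Hi).
    rewrite Rabs_pos_eq in H by auto. lra. }
  assert (HK : Omega_hull n xstar). { apply (Omega_hull_closed n (fun j => xs (phi j))); auto. intros; apply Hxs. }
  pose proof (HB xstar (Omega_hull_nonzero n xstar HK)).
  assert (Hc : Un_cv (fun j => Txm m n B (xs (phi j))) (Txm m n B xstar)).
  { apply cv_hform; auto. intros; apply Omega_hull_box; apply Hxs. apply Omega_hull_box; auto. }
  assert (Txm m n B xstar <= 0).
  { apply (Rle_cv_lim (Un := fun j => Txm m n B (xs (phi j))) (Vn := fun j => / INR (S (phi j)))); auto.
    intros j. left. apply Hxs.
    intros eps He. destruct (INR_archimed eps 1 He) as [N HN]. exists N. intros j Hj. unfold R_dist. rewrite Rminus_0_r.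
    pose proof (incr_seq_ge_id phi Hphi j).
    rewrite Rabs_pos_eq by (left; apply Rinv_0_lt_compat, lt_0_INR; lia).
    assert (/ INR (S (phi j)) <= / INR (S N)). { apply Rinv_le_contravar. apply lt_0_INR; lia. apply le_INR; lia. }
    assert (/ INR (S N) < eps). { rewrite S_INR. apply Rmult_lt_reg_r with (INR N + 1). pose proof (pos_INR N); lra.
      rewrite Rinv_l by (pose proof (pos_INR N); lra). nra. }
    lra. }
  lra. Qed.

(** * Projection and stationarity *)

Lemma proj_maximizes_inner : forall n P y w, is_proj n P -> Omega n w -> inner n y w <= inner n y (P y).
Proof. intros n P y w HP Hw. destruct (HP y) as [HPy Hmin]. specialize (Hmin w Hw). unfold vnorm in Hmin.
  apply sqrt_le_0 in Hmin; try apply inner_self_ge0. rewrite !inner_sub_self in Hmin.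
  destruct HPy as [HPy _]. destruct Hw as [Hw _]. lra. Qed.

Lemma sqrt_first_order_le : forall a e, 0 <= a -> 0 <= e ->
  sqrt (1 + 2 * e * a + e^2) <= 1 + e * a + e^2 / 2.
Proof. intros a e Ha He.
  assert (HNN : sqrt (1 + 2 * e * a + e^2) * sqrt (1 + 2 * e * a + e^2) = 1 + 2 * e * a + e^2)
    by (apply sqrt_sqrt; nra).
  assert (0 <= e^2 * (a * a)) by (apply Rmult_le_pos; [apply pow2_ge_0 | nra]).
  assert (0 <= e^3 * a) by (apply Rmult_le_pos; [apply pow_le | ]; lra).
  assert (0 <= e^4) by (apply pow_le; lra).
  apply Rsqr_incr_0_var; [unfold Rsqr; rewrite HNN; nra | nra]. Qed.

(* Test the hypothesis with w = (x + eps e_j) / |x + eps e_j|: to first order in eps it reads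
   b eps g_j <= O(eps^2), which fails for small eps > 0 when g_j > 0. *)
Lemma grad_nonpos_of_proj_ineq : forall n x gv b, Omega n x -> inner n gv x = 0 -> 0 < b ->
  (forall w, Omega n w -> 0 < inner n gv w -> b * inner n gv w <= 1 - inner n x w) ->
  forall j, (j < n)%nat -> gv j <= 0.
Proof. intros n x gv b Hx Hgx Hb Hw j Hj. apply Rnot_lt_le. intro Hg.
  set (eps := b * gv j / 2). assert (Heps : 0 < eps) by (unfold eps; nra).
  set (e := fun i : nat => if Nat.eq_dec i j then 1 else 0).
  set (v := fun i => x i + eps * e i).
  destruct Hx as [Hxx Hx0]. pose proof (Hx0 j Hj) as Hxj.
  assert (Hxj1 : x j <= 1). { pose proof (sq_le_inner_self n x j Hj). nra. }
  assert (Hvv : inner n v v = 1 + 2 * eps * x j + eps^2).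
  { assert (E1 : inner n v v = inner n v x + eps * inner n v e) by (unfold v at 2; apply inner_add_scal_r).
    assert (E2 : inner n v x = inner n x x + eps * inner n x e) by (rewrite inner_comm; unfold v; apply inner_add_scal_r).
    assert (E3 : inner n v e = v j) by (rewrite inner_comm; unfold e; apply inner_unit_l; auto).
    assert (E4 : inner n x e = x j) by (rewrite inner_comm; unfold e; apply inner_unit_l; auto).
    rewrite E1, E2, E3, E4, Hxx. unfold v, e. destruct (Nat.eq_dec j j); [|lia]. ring. }
  set (N := sqrt (1 + 2 * eps * x j + eps^2)).
  assert (HN0 : 0 < N) by (apply sqrt_lt_R0; nra).
  assert (HNN : N * N = 1 + 2 * eps * x j + eps^2) by (apply sqrt_sqrt; nra).
  set (w := fun i => / N * v i).
  assert (Hom : Omega n w).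
  { split. unfold w. rewrite inner_scal_l, inner_comm, inner_scal_l. rewrite Hvv. rewrite <- HNN. field. lra.
    intros i Hi. unfold w, v, e. apply Rmult_le_pos. left; apply Rinv_0_lt_compat; auto.
    pose proof (Hx0 i Hi). destruct (Nat.eq_dec i j); nra. }
  assert (Hgw : inner n gv w = / N * (eps * gv j)).
  { unfold w. rewrite inner_comm, inner_scal_l, inner_comm. unfold v. rewrite inner_add_scal_r, Hgx.
    rewrite inner_comm. unfold e. rewrite inner_unit_l by auto. ring. }
  assert (Hxw : inner n x w = / N * (1 + eps * x j)).
  { unfold w. rewrite inner_comm, inner_scal_l, inner_comm. unfold v. rewrite inner_add_scal_r, Hxx.
    rewrite inner_comm. unfold e. rewrite inner_unit_l by auto. ring. }
  assert (Hpos : 0 < inner n gv w). { rewrite Hgw. apply Rmult_lt_0_compat. apply Rinv_0_lt_compat; auto. nra. }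
  specialize (Hw w Hom Hpos). rewrite Hgw, Hxw in Hw.
  assert (b * (eps * gv j) <= N - 1 - eps * x j).
  { apply Rmult_le_reg_l with (/ N). apply Rinv_0_lt_compat; auto.
    replace (/ N * (N - 1 - eps * x j)) with (1 - / N * (1 + eps * x j)) by (field; lra). nra. }
  assert (N <= 1 + eps * x j + eps^2 / 2) by (apply sqrt_first_order_le; lra).
  assert (b * gv j <= eps / 2) by (apply Rmult_le_reg_l with eps; auto; nra).
  unfold eps in H1. nra. Qed.

Lemma TEiCP_of_grad_nonpos : forall m n A B x, (1 <= m)%nat -> 0 < Txm m n B x -> Omega n x ->
  (forall i, (i < n)%nat -> grad m n A B x i <= 0) -> TEiCP m n A B (lam m n A B x) x.
Proof. intros m n A B x Hm Hq Hx Hg.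
  assert (HmR : 0 < INR m) by (apply lt_0_INR; lia).
  split; [|split; [|split]].
  - apply Omega_hull_nonzero, Omega_in_hull; auto.
  - apply Hx.
  - intros i Hi. specialize (Hg i Hi). unfold grad in Hg.
    assert (0 < INR m / Txm m n B x) by (apply Rdiv_lt_0_compat; lra).
    assert (Txm1 m n A x i - lam m n A B x * Txm1 m n B x i <= 0).
    { apply Rnot_lt_le. intro. assert (0 < INR m / Txm m n B x * (Txm1 m n A x i - lam m n A B x * Txm1 m n B x i)) by (apply Rmult_lt_0_compat; auto). lra. }
    lra.
  - rewrite (inner_ext n x _ x (fun i => lam m n A B x * Txm1 m n B x i + (-1) * Txm1 m n A x i)) by (intros; ring || auto).
    rewrite inner_add_scal_r.
    assert (E1 : inner n x (fun i => lam m n A B x * Txm1 m n B x i) = lam m n A B x * inner n x (Txm1 m n B x)).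
    { rewrite inner_comm, inner_scal_l, inner_comm. auto. }
    rewrite E1, !Txm_Euler by auto. unfold lam. field. lra. Qed.

Lemma stationary_of_grad_nonpos : forall m n A B x, (1 <= m)%nat -> 0 < Txm m n B x -> Omega n x ->
  (forall i, (i < n)%nat -> grad m n A B x i <= 0) -> constrained_stationary m n A B x.
Proof. intros m n A B x Hm Hq Hx Hg. split; auto. exists 0, (fun i => - grad m n A B x i). split; [|split].
  - intros; ring.
  - intros i Hi. specialize (Hg i Hi). lra.
  - rewrite (inner_ext n _ x (fun i => (-1) * grad m n A B x i) x) by (intros; ring || auto).
    rewrite inner_scal_l. rewrite grad_orth; auto. ring. lra. Qed.

Lemma Omega_ext : forall n x y, (forall i, (i < n)%nat -> x i = y i) -> Omega n x -> Omega n y.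
Proof. intros n x y H [H1 H2]. split. rewrite <- (inner_ext n x x y y); auto. intros. rewrite <- H; auto. Qed.

(** * One step of SPG1 *)

Lemma Rdiv_lt_of_lt_mul_le : forall a s K K', 0 < K' -> K <= K' -> 0 < s -> a < s * K -> a / K' < s.
Proof. intros a s K K' HK' HK Hs Ha. apply Rmult_lt_reg_r with K'; auto.
  unfold Rdiv. rewrite Rmult_assoc, Rinv_l by lra. rewrite Rmult_1_r.
  assert (s * K <= s * K') by (apply Rmult_le_compat_l; lra). lra. Qed.

(* Here r = |x|, G / r = <g(x), d>, V = |z - u|^2 and t' = s / c is the parameter of the trial point
   on the segment [u, z].  Dividing the failed test by t' and bounding V by the projection estimate
   leaves 1 - rho < s K with K <= 2 Cd N^4 bu + rho N. *)
Lemma armijo_failure_real : forall G V r s c t' beta bu Cd N rho lamu lamw,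
  0 < r <= 1 -> 1 <= N * r -> 0 < s <= 1 -> c = r * (1 - s) + s -> t' = s / c ->
  0 < beta <= bu -> 0 <= Cd -> 0 <= V -> r * r * V <= 2 * beta * G ->
  lamu + t' * G - Cd * N * (t' * t') * V <= lamw ->
  lamw < lamu + rho * s * (G / r) -> 0 < rho < 1 ->
  (1 - rho) / (2 * Cd * N^4 * bu + rho * N) < s.
Proof. intros G V r s c t' beta bu Cd N rho lamu lamw Hr HNr Hs Hc Ht Hb HCd HV Hproj Hdesc Hfail Hrho.
  set (ir := / r). assert (Hir : r * ir = 1) by (unfold ir; field; lra).
  assert (Hir1 : 1 <= ir). { unfold ir. rewrite <- Rinv_1. apply Rinv_le_contravar; lra. }
  assert (HirN : ir <= N). { apply Rmult_le_reg_l with r. lra. nra. }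
  assert (Hc1 : r <= c) by nra. assert (Hc2 : c <= 1) by nra. assert (Hc0 : 0 < c) by lra.
  assert (Htc : t' * c = s) by (subst t'; field; lra).
  assert (Ht0 : 0 < t') by (subst t'; apply Rdiv_lt_0_compat; lra).
  assert (Htr : t' <= s * ir). { apply Rmult_le_reg_r with c; auto. rewrite Htc. 
     assert (s * ir * c >= s * ir * r) by (apply Rle_ge, Rmult_le_compat_l; [apply Rmult_le_pos; lra| lra]). 
     replace (s * ir * r) with s in H by (unfold ir; field; lra). lra. }
  assert (HG : 0 <= G). { assert (0 <= r * r * V) by (apply Rmult_le_pos; nra). nra. }
  assert (H3 : t' * G - Cd * N * (t' * t') * V < rho * s * (G * ir)) by (unfold Rdiv in Hfail; fold ir in Hfail; lra).
  assert (HG0 : 0 < G).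
  { destruct HG as [HG|HG]; auto. subst G. assert (r * r * V <= 0) by lra.
    assert (V = 0). { assert (0 < r * r) by nra. nra. } subst V. lra. }
  assert (H5 : G - Cd * N * t' * V < rho * c * G * ir).
  { apply Rmult_lt_reg_l with t'; auto.
    replace (t' * (rho * c * G * ir)) with (rho * (t' * c) * (G * ir)) by ring. rewrite Htc. nra. }
  assert (HV2 : V <= 2 * beta * G * (ir * ir)).
  { replace V with (r * r * V * (ir * ir)) by (unfold ir; field; lra).
    apply Rmult_le_compat_r. nra. auto. }
  assert (H6 : Cd * N * t' * V <= Cd * N * (s * ir) * (2 * bu * G * (ir * ir))).
  { assert (0 <= Cd * N) by nra.
    assert (V <= 2 * bu * G * (ir * ir)). { apply Rle_trans with (2 * beta * G * (ir * ir)); auto.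
      apply Rmult_le_compat_r. nra. apply Rmult_le_compat_r; lra. }
    assert (t' * V <= (s * ir) * (2 * bu * G * (ir * ir))) by (apply Rmult_le_compat; lra).
    replace (Cd * N * t' * V) with ((Cd * N) * (t' * V)) by ring.
    replace (Cd * N * (s * ir) * (2 * bu * G * (ir * ir))) with ((Cd * N) * ((s * ir) * (2 * bu * G * (ir * ir)))) by ring.
    apply Rmult_le_compat_l; auto. }
  assert (H7 : rho * c * G * ir <= rho * G + rho * G * s * ir).
  { replace (rho * c * G * ir) with (rho * G * (c * ir)) by ring.
    assert (c * ir = 1 - s + s * ir) by (rewrite Hc; unfold ir; field; lra).
    rewrite H. assert (0 <= rho * G) by nra. nra. }
  assert (H8 : 1 - rho < s * (2 * Cd * N * bu * (ir * ir * ir) + rho * ir)).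
  { apply Rmult_lt_reg_r with G; auto. nra. }
  assert (H9 : 2 * Cd * N * bu * (ir * ir * ir) + rho * ir <= 2 * Cd * N^4 * bu + rho * N).
  { assert (ir * ir * ir <= N * N * N). { assert (ir*ir <= N*N) by (apply Rmult_le_compat; lra). apply Rmult_le_compat; nra. }
    assert (0 <= 2 * Cd * N * bu) by (repeat apply Rmult_le_pos; lra).
    assert (2 * Cd * N * bu * (ir * ir * ir) <= 2 * Cd * N * bu * (N * N * N)) by (apply Rmult_le_compat_l; auto).
    nra. }
  assert (Hden : 0 < 2 * Cd * N^4 * bu + rho * N).
  { assert (0 <= 2 * Cd * N^4 * bu). { assert (0 <= N^4) by (apply pow_le; nra). assert (0 <= bu) by lra.
      repeat apply Rmult_le_pos; lra. } nra. }
  apply (Rdiv_lt_of_lt_mul_le (1 - rho) s _ _ Hden H9 ltac:(lra) H8). Qed.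

Lemma norm_growth_real : forall X XZ r a alpha beta bu D,
  X = r * r -> 0 < r <= 1 -> 0 < a <= alpha -> alpha <= 1 -> r - beta * D <= XZ -> XZ <= r ->
  0 <= D -> 0 < beta <= bu ->
  X + 2 * a * (r * (1 - r)) - 2 * bu * D <= (1 - alpha) * ((1 - alpha) * X + alpha * XZ) + alpha * ((1 - alpha) * XZ + alpha * 1).
Proof. intros X XZ r a alpha beta bu D HX Hr Ha Hal Hxz1 Hxz2 HD Hb.
  set (e := r - XZ). assert (He0 : 0 <= e) by (unfold e; lra). assert (He1 : e <= bu * D) by (unfold e; nra).
  replace ((1 - alpha) * ((1 - alpha) * X + alpha * XZ) + alpha * ((1 - alpha) * XZ + alpha * 1))
     with (X + 2 * alpha * (r * (1 - r)) + alpha * alpha * ((1 - r) * (1 - r)) - 2 * alpha * (1 - alpha) * e)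
     by (unfold e; subst X; ring).
  assert (0 <= r * (1 - r)) by nra.
  assert (2 * a * (r * (1 - r)) <= 2 * alpha * (r * (1 - r))) by nra.
  assert (0 <= alpha * alpha * ((1 - r) * (1 - r))) by (apply Rmult_le_pos; nra).
  assert (alpha * (1 - alpha) <= 1) by nra.
  assert (2 * alpha * (1 - alpha) * e <= 2 * e) by nra.
  lra. Qed.

Lemma proj_step_facts : forall m n A B P x beta, (1 <= m)%nat -> is_proj n P ->
  Omega_hull n x -> Txm m n B x <> 0 -> 0 < beta ->
  let z := P (fun j => x j + beta * grad m n A B x j) in
  let D := inner n (grad m n A B x) (direction m n A B P x beta) in
  D = inner n (grad m n A B x) z /\ sqrt (inner n x x) <= inner n x z + beta * D /\ inner n x z <= sqrt (inner n x x) /\ 0 <= D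
  /\ Omega n z.
Proof. intros m n A B P x beta Hm HP Hx Hq Hb z D.
  destruct (Omega_hull_normalize n x Hx) as [[Hr _] [Hrr [_ Hu]]].
  set (X := inner n x x) in *. set (r := sqrt X) in *. set (u := fun i => / r * x i) in *.
  assert (Hz : Omega n z) by (apply (HP _)).
  assert (HD : D = inner n (grad m n A B x) z).
  { unfold D, direction. fold z. rewrite inner_sub_r. rewrite grad_orth; auto. ring. }
  assert (Hv : inner n (fun j => x j + beta * grad m n A B x j) u <= inner n (fun j => x j + beta * grad m n A B x j) z).
  { apply proj_maximizes_inner; auto. }
  rewrite !inner_add_scal_l in Hv.
  assert (E1 : inner n x u = r). { unfold u. rewrite inner_comm, inner_scal_l. fold X. rewrite <- Hrr. field. lra. }
  assert (E2 : inner n (grad m n A B x) u = 0). { unfold u. rewrite inner_comm, inner_scal_l, inner_comm. rewrite grad_orth; auto. ring. }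
  rewrite E1, E2 in Hv. rewrite <- HD in Hv.
  assert (Hxz : inner n x z <= r).
  { assert (inner n x z = r * inner n u z). { unfold u. rewrite inner_scal_l. field. lra. }
    pose proof (inner_le_avg n u z). destruct Hu as [Hu _]. destruct Hz as [Hz _]. nra. }
  split; [auto|]. split; [lra|]. split; [auto|]. split; [|auto].
  apply Rmult_le_reg_l with beta; auto. rewrite Rmult_0_r. lra. Qed.

Section Step.
Variables (m n : nat) (A B : tensor) (P : vec -> vec) (rho cB : R).
Hypotheses (Hm : (2 <= m)%nat) (HA : symmetric_tensor m n A) (HB : symmetric_tensor m n B)
  (HP : is_proj n P) (Hrho : 0 < rho < 1) (HcB : 0 < cB) (HcBK : forall y, Omega_hull n y -> cB <= Txm m n B y).

Local Notation g := (grad m n A B).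
Local Notation lamf := (lam m n A B).

Lemma Txm_hull_neq0 : forall y, Omega_hull n y -> Txm m n B y <> 0.
Proof. intros. pose proof (HcBK y H). lra. Qed.

Lemma grad_orth_hull : forall y, Omega_hull n y -> inner n (g y) y = 0.
Proof. intros. apply grad_orth. lia. apply Txm_hull_neq0; auto. Qed.

(* Lower bound for an Armijo trial step that fails; [bu] bounds the spectral step beta. *)
Definition armijo_floor (bu : R) : R := (1 - rho) / (2 * lam_curv m n A B cB * INR n ^ 4 * bu + rho * INR n).

Lemma lam_segment_lower : forall u z s, Omega n u -> Omega n z -> 0 <= s <= 1 ->
  lamf u + s * inner n (g u) (fun i => z i - u i)
    - lam_curv m n A B cB * INR n * (s * s) * inner n (fun i => z i - u i) (fun i => z i - u i)
  <= lamf (fun i => u i + s * (z i - u i)).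
Proof. intros u z s Hu Hz Hs.
  set (v := fun i => z i - u i). set (V := inner n v v). set (G := inner n (g u) v).
  set (y := fun i => u i + s * (z i - u i)).
  assert (HuK : Omega_hull n u) by (apply Omega_in_hull; auto).
  assert (HyK : Omega_hull n y) by (apply Omega_hull_segment; auto).
  pose proof (lam_taylor m n A B u y cB HA HB (Omega_hull_box n u HuK) (Omega_hull_box n y HyK)
                HcB (HcBK u HuK) (HcBK y HyK)) as Htaylor.
  assert (E1 : inner n (g u) (fun i => y i - u i) = s * G).
  { unfold y. rewrite (inner_ext n _ _ (g u) (fun i => s * v i)) by (intros; unfold v; ring || auto).
    rewrite inner_comm, inner_scal_l, inner_comm. auto. }
  assert (E2 : l1norm n (fun i => y i - u i) = s * l1norm n v).
  { unfold l1norm, y, v. rewrite <- sumR_scal_l. apply sumR_ext. intros.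
    replace (u i + s * (z i - u i) - u i) with (s * (z i - u i)) by ring.
    rewrite Rabs_mult, (Rabs_pos_eq s) by lra. auto. }
  assert (E3 : (l1norm n v)^2 <= INR n * V) by apply sumR_abs_sq_le.
  pose proof (lam_curv_ge0 m n A B cB HcB) as HCd.
  rewrite E1, E2 in Htaylor.
  assert (lam_curv m n A B cB * (s * l1norm n v) ^ 2 <= lam_curv m n A B cB * INR n * (s * s) * V).
  { replace ((s * l1norm n v)^2) with ((s * s) * (l1norm n v)^2) by ring.
    replace (lam_curv m n A B cB * INR n * (s * s) * V) with (lam_curv m n A B cB * ((s * s) * (INR n * V))) by ring.
    apply Rmult_le_compat_l; auto. apply Rmult_le_compat_l; nra. }
  pose proof (Rle_abs (lamf u - lamf y + s * G)).
  rewrite <- Rabs_Ropp in H0.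
  replace (- (lamf u - lamf y + s * G)) with (lamf y - lamf u - s * G) in H0 by ring.
  fold v V G y. lra. Qed.

Lemma armijo_failure_bound : forall x beta bu s, Omega_hull n x -> 0 < beta <= bu -> 0 < s <= 1 ->
  let d := direction m n A B P x beta in
  ~ armijo_ok m n A B rho x d s -> armijo_floor bu < s.
Proof. intros x beta bu s Hx Hb Hs d Hfail.
  destruct (proj_step_facts m n A B P x beta ltac:(lia) HP Hx (Txm_hull_neq0 x Hx) ltac:(lra)) as [HD [HF1 [Hxz [HD0 Hz]]]].
  set (z := P (fun j => x j + beta * g x j)) in *.
  set (D := inner n (g x) (direction m n A B P x beta)) in *.
  destruct (Omega_hull_normalize n x Hx) as [[Hr Hr1] [Hrr [HNr Hu]]].
  set (X := inner n x x) in *. set (r := sqrt X) in *. set (u := fun i => / r * x i) in *.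
  assert (HuK : Omega_hull n u) by (apply Omega_in_hull; auto).
  assert (Hxu : forall i, (i < n)%nat -> x i = r * u i). { intros. unfold u. field. lra. }
  set (v := fun i => z i - u i). set (V := inner n v v). set (G := inner n (g u) v).
  assert (HguE : inner n (g u) u = 0) by (apply grad_orth_hull; auto).
  assert (Hgx : forall i, (i < n)%nat -> g x i = g u i / r).
  { intros. rewrite (grad_ext m n A B x (fun i => r * u i)) by auto. apply grad_scale. lia. lra. apply Txm_hull_neq0; auto. }
  assert (HDG : D = G / r).
  { rewrite HD. unfold G, v. rewrite inner_sub_r, HguE, Rminus_0_r.
    rewrite (inner_ext n (g x) z (fun i => / r * g u i) z). rewrite inner_scal_l. unfold Rdiv. ring.
    intros. rewrite Hgx by auto. unfold Rdiv. ring. auto. }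
  assert (Hxz2 : inner n x z = r * inner n u z).
  { rewrite (inner_ext n x z (fun i => r * u i) z) by auto. apply inner_scal_l. }
  assert (HV : V = 2 - 2 * inner n u z).
  { unfold V, v. rewrite inner_sub_self. destruct Hu as [Hu _]. destruct Hz as [Hz _]. rewrite Hz, Hu, inner_comm. ring. }
  assert (HV0 : 0 <= V) by apply inner_self_ge0.
  assert (Hproj : r * r * V <= 2 * beta * G).
  { rewrite HV. rewrite Hxz2, HDG in HF1. 
    assert (r * (r * (1 - inner n u z)) <= r * (beta * (G / r))) by (apply Rmult_le_compat_l; lra).
    replace (r * (beta * (G / r))) with (beta * G) in H by (field; lra). nra. }
  (* x + s d = c * (u + t' (z - u)) with c = r (1 - s) + s, and lambda is invariant under scaling. *)
  set (c := r * (1 - s) + s). set (t' := s / c).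
  assert (Hc0 : 0 < c) by (unfold c; nra).
  assert (Ht0 : 0 <= t' <= 1).
  { unfold t'. split. unfold Rdiv; apply Rmult_le_pos; [lra| left; apply Rinv_0_lt_compat; lra].
    apply Rmult_le_reg_r with c; auto. unfold Rdiv. rewrite Rmult_assoc, Rinv_l by lra. unfold c; nra. }
  set (y' := fun i => u i + t' * (z i - u i)).
  pose proof (lam_segment_lower u z t' Hu Hz Ht0) as Hdesc2. fold v V G y' in Hdesc2.
  assert (Hlx : lamf x = lamf u).
  { rewrite (lam_ext m n A B x (fun i => r * u i)) by auto. apply lam_scale; lra. }
  assert (Hlw : lamf (fun i => x i + s * d i) = lamf y').
  { rewrite (lam_ext m n A B _ (fun i => c * y' i)). apply lam_scale; lra.
    intros i Hi. unfold d, direction, y', t'. fold z. unfold u. unfold c. unfold c in Hc0. field. repeat split; lra. }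
  unfold armijo_ok in Hfail. fold d in D.
  assert (Hfail2 : lamf y' < lamf u + rho * s * (G / r)).
  { apply Rnot_ge_lt in Hfail. rewrite Hlw, Hlx in Hfail. fold D in Hfail. rewrite HDG in Hfail. lra. }
  pose proof (lam_curv_ge0 m n A B cB HcB).
  unfold armijo_floor.
  eapply armijo_failure_real with (G := G) (V := V) (r := r) (c := c) (t' := t') (beta := beta)
    (Cd := lam_curv m n A B cB) (lamu := lamf u) (lamw := lamf y'); eauto; lra. Qed.
End Step.

Lemma cv_lam : forall m n A B (xs : nat -> vec) xstar, (forall j, in_box n (xs j)) -> in_box n xstar ->
  (forall i, (i < n)%nat -> Un_cv (fun j => xs j i) (xstar i)) -> Txm m n B xstar <> 0 ->
  Un_cv (fun j => lam m n A B (xs j)) (lam m n A B xstar).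
Proof. intros. unfold lam. apply cv_div; auto; rewrite !Txm_hform; apply cv_hform; auto. Qed.

Lemma cv_grad : forall m n A B (xs : nat -> vec) xstar i, (forall j, in_box n (xs j)) -> in_box n xstar ->
  (forall i, (i < n)%nat -> Un_cv (fun j => xs j i) (xstar i)) -> Txm m n B xstar <> 0 ->
  Un_cv (fun j => grad m n A B (xs j) i) (grad m n A B xstar i).
Proof. intros. unfold grad. apply CV_mult. apply cv_div; auto. apply cv_const. rewrite !Txm_hform; apply cv_hform; auto.
  apply CV_minus. rewrite !Txm1_hform; apply cv_hform; auto. apply CV_mult. apply cv_lam; auto.
  rewrite !Txm1_hform; apply cv_hform; auto. Qed.

Lemma cv_inner_l : forall n (xs : nat -> vec) xstar w, (forall i, (i < n)%nat -> Un_cv (fun j => xs j i) (xstar i)) ->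
  Un_cv (fun j => inner n (xs j) w) (inner n xstar w).
Proof. intros. unfold inner. apply cv_sumR. intros. apply CV_mult; auto. apply cv_const. Qed.

Lemma cv_inner_self : forall n (xs : nat -> vec) xstar, (forall i, (i < n)%nat -> Un_cv (fun j => xs j i) (xstar i)) ->
  Un_cv (fun j => inner n (xs j) (xs j)) (inner n xstar xstar).
Proof. intros. unfold inner. apply cv_sumR. intros. apply CV_mult; auto. Qed.

Lemma beta_next_bounds : forall m n A B P rho bmin bmax x beta t k, 0 < bmin <= bmax ->
  SPG1_step m n A B P rho bmin bmax x beta t k -> bmin <= beta (S k) <= bmax.
Proof. intros m n A B P rho bmin bmax x beta t k Hb Hs. destruct Hs as [_ [_ H]]. cbv zeta in H. destruct H as [H1 H2].
  match type of H1 with ?b <= 0 -> _ => destruct (Rle_lt_dec b 0) as [Hle|Hlt] end.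
  rewrite H1; auto; lra.
  rewrite H2 by lra. split. apply Rmax_l. apply Rmax_lub. lra. apply Rmin_l. Qed.

Lemma proj_fix : forall n P y x, is_proj n P -> Omega n x -> (forall i, (i < n)%nat -> y i = x i) ->
  forall i, (i < n)%nat -> P y i = x i.
Proof. intros n P y x HP Hx Hy i Hi. destruct (HP y) as [_ Hmin]. specialize (Hmin x Hx).
  assert (vnorm n (fun i => y i - x i) = 0).
  { unfold vnorm. rewrite (inner_ext n _ _ (fun _ => 0) (fun _ => 0)). unfold inner. rewrite (sumR_ext n _ (fun _ => 0)) by (intros; ring).
    rewrite sumR_const0. apply sqrt_0. intros; rewrite Hy; auto; ring. intros; rewrite Hy; auto; ring. }
  rewrite H in Hmin. assert (vnorm n (fun i => y i - P y i) = 0) by (pose proof (sqrt_pos (inner n (fun i => y i - P y i) (fun i => y i - P y i))); unfold vnorm in *; lra).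
  pose proof (vnorm_eq0 n _ H0 i Hi). simpl in H1. rewrite <- Hy by auto. lra. Qed.

Lemma grad_nonpos_of_proj_fixed : forall m n A B P x beta, (1 <= m)%nat -> is_proj n P ->
  Omega n x -> Txm m n B x <> 0 -> 0 < beta -> vzero n (direction m n A B P x beta) ->
  forall i, (i < n)%nat -> grad m n A B x i <= 0.
Proof. intros m n A B P x beta Hm HP Hx Hq Hb Hz.
  set (y := fun j => x j + beta * grad m n A B x j).
  assert (Hxk : forall i, (i < n)%nat -> P y i = x i).
  { intros i Hi. specialize (Hz i Hi). unfold direction in Hz. fold y in Hz. lra. }
  apply (grad_nonpos_of_proj_ineq n x (grad m n A B x) beta); auto.
  { apply grad_orth; auto. }
  intros w Hw Hgw. pose proof (proj_maximizes_inner n P y w HP Hw) as Hv.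
  rewrite (inner_ext n y (P y) y x) in Hv by auto.
  unfold y in Hv. rewrite !inner_add_scal_l, (grad_orth m n A B x) in Hv by auto.
  destruct Hx as [Hxx _]. lra. Qed.

Lemma stop_TEiCP : forall (m n : nat) (A B : tensor) (rho bmin bmax : R) (P : vec -> vec)
         (x : nat -> vec) (beta : nat -> R) (t : nat -> nat),
    (2 <= m)%nat -> pos_def m n B -> 0 < bmin <= bmax -> is_proj n P ->
    SPG1_generated m n A B P rho bmin bmax x beta t ->
    forall k,
        (forall j, (j < k)%nat -> ~ vzero n (direction m n A B P (x j) (beta j))) ->
        vzero n (direction m n A B P (x k) (beta k)) ->
        TEiCP m n A B (lam m n A B (x k)) (x k).
Proof. intros m n A B rho bmin bmax P x beta t Hm HBpd Hb HP [Hx0 [Hbeta0 Hst]] k Hprev Hz.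
  assert (Hom : Omega n (x k)).
  { apply (Omega_ext n (P (fun j => x k j + beta k * grad m n A B (x k) j))); [|apply HP].
    intros i Hi. specialize (Hz i Hi). unfold direction in Hz. lra. }
  assert (Hq : 0 < Txm m n B (x k)) by (apply HBpd, Omega_hull_nonzero, Omega_in_hull; auto).
  apply TEiCP_of_grad_nonpos; auto; [lia|].
  destruct k as [|k].
  - (* beta 0 = 1 / |g(x 0)| vanishes (Rocq's 1 / 0 = 0) exactly when g(x 0) = 0. *)
    destruct (Req_dec (vnorm n (grad m n A B (x 0%nat))) 0) as [H0|H0].
    + intros i Hi. rewrite (vnorm_eq0 n _ H0 i Hi). lra.
    + apply (grad_nonpos_of_proj_fixed m n A B P (x 0%nat) (beta 0%nat)); auto; [lia|lra|].
      rewrite Hbeta0. pose proof (sqrt_pos (inner n (grad m n A B (x 0%nat)) (grad m n A B (x 0%nat)))).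
      unfold vnorm in H0. apply Rdiv_lt_0_compat; [lra|]. destruct H as [H|H]; [auto | exfalso; apply H0; auto].
  - assert (Hs : SPG1_step m n A B P rho bmin bmax x beta t k) by (apply Hst; intros; apply Hprev; lia).
    pose proof (beta_next_bounds m n A B P rho bmin bmax x beta t k Hb Hs).
    apply (grad_nonpos_of_proj_fixed m n A B P (x (S k)) (beta (S k))); auto; [lia|lra|lra]. Qed.

(** * Convergence of SPG1 *)

Section SPG1_run.
Variables (m n : nat) (A B : tensor) (rho bmin bmax cB : R) (P : vec -> vec)
  (x : nat -> vec) (beta : nat -> R) (t : nat -> nat).
Hypotheses (Hm : (2 <= m)%nat) (HA : symmetric_tensor m n A) (HB : symmetric_tensor m n B)
  (Hrho : 0 < rho < 1) (Hb : 0 < bmin <= bmax) (HP : is_proj n P)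
  (HcB : 0 < cB) (HcBK : forall y, Omega_hull n y -> cB <= Txm m n B y)
  (Hgen : SPG1_generated m n A B P rho bmin bmax x beta t)
  (Hnz : forall k, ~ vzero n (direction m n A B P (x k) (beta k))).

Local Notation g := (grad m n A B).
Local Notation lamf := (lam m n A B).

Let z (k : nat) : vec := P (fun j => x k j + beta k * g (x k) j).
Let al (k : nat) : R := (/2) ^ t k.
Let Dk (k : nat) : R := inner n (g (x k)) (direction m n A B P (x k) (beta k)).
Let X (k : nat) : R := inner n (x k) (x k).

Lemma run_step k : SPG1_step m n A B P rho bmin bmax x beta t k.
Proof. destruct Hgen as [_ [_ Hsteps]]. apply Hsteps. intros; apply Hnz. Qed.

Lemma beta0_pos : 0 < beta 0%nat.
Proof.
  destruct Hgen as [Hx0 [Hbeta0 _]]. rewrite Hbeta0.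
  destruct (Req_dec (vnorm n (g (x 0%nat))) 0) as [H0|H0].
  - exfalso. apply (Hnz 0%nat). intros i Hi. unfold direction.
    rewrite (proj_fix n P _ (x 0%nat) HP Hx0); [ring| |auto].
    intros j Hj. rewrite (vnorm_eq0 n _ H0 j Hj). ring.
  - pose proof (sqrt_pos (inner n (g (x 0%nat)) (g (x 0%nat)))). unfold vnorm in H0.
    apply Rdiv_lt_0_compat; [lra|]. destruct H as [H|H]; [auto | exfalso; apply H0; auto].
Qed.

Let bl : R := Rmin bmin (beta 0%nat).
Let bu : R := Rmax bmax (beta 0%nat).

Lemma beta_lo_pos : 0 < bl.
Proof. pose proof beta0_pos. unfold bl; apply Rmin_glb_lt; lra. Qed.

Lemma beta_bounded k : bl <= beta k <= bu.
Proof.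
  unfold bl, bu. destruct k as [|k].
  - split; [apply Rmin_r | apply Rmax_r].
  - pose proof (beta_next_bounds m n A B P rho bmin bmax x beta t k Hb (run_step k)).
    split; [apply Rle_trans with bmin; [apply Rmin_l | lra]
           | apply Rle_trans with bmax; [lra | apply Rmax_l]].
Qed.

Lemma beta_pos k : 0 < beta k.
Proof. pose proof (beta_bounded k); pose proof beta_lo_pos; lra. Qed.

Lemma halvings_bounds s : 0 < (/2) ^ s <= 1.
Proof. split; [apply pow_lt; lra | rewrite <- (pow1 s); apply pow_incr; lra]. Qed.

Lemma iterate_update k i : (i < n)%nat -> x (S k) i = x k i + al k * (z k i - x k i).
Proof. intros Hi. destruct (run_step k) as [_ [H _]]. rewrite H by auto. reflexivity. Qed.

Lemma iterates_in_hull k : Omega_hull n (x k).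
Proof.
  induction k as [|k IH]; [apply Omega_in_hull, Hgen|].
  apply (Omega_hull_ext n (fun i => x k i + al k * (z k i - x k i))).
  - intros; rewrite iterate_update; auto.
  - apply Omega_hull_segment; [auto | apply HP |]. pose proof (halvings_bounds (t k)); unfold al; lra.
Qed.

Lemma iterate_step_facts k :
  Dk k = inner n (g (x k)) (z k) /\ sqrt (X k) <= inner n (x k) (z k) + beta k * Dk k
  /\ inner n (x k) (z k) <= sqrt (X k) /\ 0 <= Dk k.
Proof.
  destruct (proj_step_facts m n A B P (x k) (beta k) ltac:(lia) HP (iterates_in_hull k)
              (Txm_hull_neq0 m n B cB HcB HcBK _ (iterates_in_hull k)) (beta_pos k))
    as [? [? [? [? _]]]].
  repeat split; auto.
Qed.

Let a : R := Rmin 1 (armijo_floor m n A B rho cB bu / 2).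

Lemma armijo_floor_pos : 0 < armijo_floor m n A B rho cB bu.
Proof.
  unfold armijo_floor. apply Rdiv_lt_0_compat; [lra|].
  pose proof (lam_curv_ge0 m n A B cB HcB).
  assert (1 <= INR n) by (apply (le_INR 1), (Omega_hull_dim_pos n (x 0%nat)), iterates_in_hull).
  assert (0 < bu) by (unfold bu; pose proof (Rmax_r bmax (beta 0%nat)); pose proof beta0_pos; lra).
  assert (0 <= INR n ^ 4) by (apply pow_le; lra).
  assert (0 <= 2 * lam_curv m n A B cB * INR n ^ 4 * bu)
    by (apply Rmult_le_pos; [apply Rmult_le_pos|]; [apply Rmult_le_pos| |]; lra).
  nra.
Qed.

Lemma step_lower_pos : 0 < a.
Proof. pose proof armijo_floor_pos. unfold a; apply Rmin_glb_lt; lra. Qed.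

(* A step that is not the first trial was preceded by a failed Armijo test at twice its size. *)
Lemma step_lower_bound k : a <= al k.
Proof.
  unfold al. destruct (t k) as [|t'] eqn:Et.
  - simpl. unfold a. apply Rmin_l.
  - destruct (run_step k) as [[_ Hfail] _]. specialize (Hfail t' ltac:(lia)).
    pose proof (beta_bounded k). pose proof (beta_pos k).
    pose proof (armijo_failure_bound m n A B P rho cB Hm HA HB HP Hrho HcB HcBK (x k) (beta k) bu
      ((/2)^t') (iterates_in_hull k) ltac:(lra) (halvings_bounds t') Hfail).
    simpl. unfold a. apply Rle_trans with (armijo_floor m n A B rho cB bu / 2); [apply Rmin_r | lra].
Qed.

Lemma lam_ascent k : lamf (x k) + rho * a * Dk k <= lamf (x (S k)).
Proof.
  destruct (run_step k) as [[Harm _] [Hx' _]]. unfold armijo_ok in Harm.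
  destruct (iterate_step_facts k) as [_ [_ [_ HD]]]. pose proof (step_lower_bound k) as Hak.
  unfold al in Hak. unfold Dk in *.
  rewrite (lam_ext m n A B (x (S k)) (fun i => x k i + (/2)^(t k) * direction m n A B P (x k) (beta k) i)) by auto.
  assert (rho * a * inner n (g (x k)) (direction m n A B P (x k) (beta k))
          <= rho * (/2)^(t k) * inner n (g (x k)) (direction m n A B P (x k) (beta k))).
  { apply Rmult_le_compat_r; auto. apply Rmult_le_compat_l; lra. }
  lra.
Qed.

Let S0 : R := (coef_norm n m A / cB - lamf (x 0%nat)) / (rho * a).

Lemma Dk_partial_sums_le N : sumR N Dk <= S0.
Proof.
  pose proof step_lower_pos.
  assert (Hsum : lamf (x 0%nat) + rho * a * sumR N Dk <= lamf (x N)).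
  { induction N; simpl; [lra|]. pose proof (lam_ascent N). lra. }
  pose proof (lam_le m n A B (x N) cB (Omega_hull_box n _ (iterates_in_hull N)) HcB (HcBK _ (iterates_in_hull N))).
  unfold S0. apply Rmult_le_reg_l with (rho * a); [nra|].
  replace (rho * a * ((coef_norm n m A / cB - lamf (x 0%nat)) / (rho * a)))
    with (coef_norm n m A / cB - lamf (x 0%nat)) by (field; lra).
  lra.
Qed.

Lemma Dk_cv0 : Un_cv Dk 0.
Proof.
  apply (cv0_of_bounded_partial_sums Dk S0); [|apply Dk_partial_sums_le].
  intros; apply iterate_step_facts.
Qed.

Lemma iterate_norm_bounds k : 0 < sqrt (X k) <= 1 /\ sqrt (X k) * sqrt (X k) = X k /\ 1 <= INR n * sqrt (X k).
Proof. destruct (Omega_hull_normalize n (x k) (iterates_in_hull k)) as [? [? [? _]]]. auto. Qed.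

Lemma norm_growth k :
  X k + 2 * a * (sqrt (X k) * (1 - sqrt (X k))) - 2 * bu * Dk k <= X (S k).
Proof.
  destruct (iterate_norm_bounds k) as [Hr [Hrr _]].
  destruct (iterate_step_facts k) as [_ [H1 [H2 H3]]].
  assert (E : X (S k) = (1 - al k) * ((1 - al k) * X k + al k * inner n (x k) (z k))
                        + al k * ((1 - al k) * inner n (x k) (z k) + al k * 1)).
  { unfold X. rewrite (inner_ext n (x (S k)) (x (S k)) (fun i => (1 - al k) * x k i + al k * z k i)
                                 (fun i => (1 - al k) * x k i + al k * z k i))
      by (intros; rewrite iterate_update; auto; ring).
    rewrite inner_lin_l, (inner_comm n (x k)), (inner_comm n (z k)), !inner_lin_l.
    destruct (HP (fun j => x k j + beta k * g (x k) j)) as [[Hzz _] _].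
    fold (z k) in Hzz. rewrite Hzz, (inner_comm n (z k) (x k)). ring. }
  rewrite E. pose proof (beta_bounded k). pose proof (step_lower_bound k).
  pose proof (halvings_bounds (t k)). pose proof step_lower_pos. pose proof (beta_pos k).
  apply (norm_growth_real (X k) (inner n (x k) (z k)) (sqrt (X k)) a (al k) (beta k) bu (Dk k));
    unfold al in *; lra.
Qed.

Lemma norm_sq_cv1 : Un_cv X 1.
Proof.
  set (W := fun k => sqrt (X k) * (1 - sqrt (X k))).
  assert (HW0 : forall k, 0 <= W k) by (intros; unfold W; destruct (iterate_norm_bounds k) as [? _]; nra).
  assert (HWs : forall N, X 0%nat + 2 * a * sumR N W - 2 * bu * sumR N Dk <= X N).
  { induction N; simpl; [lra|]. pose proof (norm_growth N). unfold W in *. lra. }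
  pose proof step_lower_pos. pose proof (beta_bounded 0%nat). pose proof beta_lo_pos.
  assert (HW : Un_cv W 0).
  { apply (cv0_of_bounded_partial_sums W ((1 + 2 * bu * S0) / (2 * a))); auto. intros N.
    apply Rmult_le_reg_l with (2 * a); [lra|].
    replace (2 * a * ((1 + 2 * bu * S0) / (2 * a))) with (1 + 2 * bu * S0) by (field; lra).
    pose proof (HWs N). pose proof (Dk_partial_sums_le N). destruct (iterates_in_hull N) as [_ [HX1 _]].
    fold (X N) in HX1. assert (0 <= X 0%nat) by apply inner_self_ge0. nra. }
  apply (cv_dominated W X 1 (2 * INR n)); auto. intros k.
  destruct (iterate_norm_bounds k) as [[Hr0 Hr1] [Hrr HNr]].
  rewrite Rabs_minus_sym, Rabs_pos_eq by nra. unfold W.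
  assert (1 - sqrt (X k) <= INR n * (sqrt (X k) * (1 - sqrt (X k)))) by nra. nra.
Qed.

Lemma proj_ineq_iterate xstar w k : Omega n w -> 0 < inner n (g xstar) w ->
  bl * inner n (g xstar) w <= (X k + 1) / 2 + bu * Dk k - inner n (x k) w
                              + bu * Rabs (inner n (g (x k)) w - inner n (g xstar) w).
Proof.
  intros Hw Hgw.
  pose proof (proj_maximizes_inner n P (fun j => x k j + beta k * g (x k) j) w HP Hw) as Hv.
  fold (z k) in Hv. rewrite !inner_add_scal_l in Hv.
  destruct (iterate_step_facts k) as [HDz [_ [_ HD0]]]. rewrite <- HDz in Hv.
  pose proof (inner_le_avg n (x k) (z k)) as Hxz.
  destruct (HP (fun j => x k j + beta k * g (x k) j)) as [[Hzz _] _]. fold (z k) in Hzz.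
  rewrite Hzz in Hxz. fold (X k) in Hxz.
  pose proof (beta_bounded k). pose proof (beta_pos k).
  assert (beta k * Dk k <= bu * Dk k) by (apply Rmult_le_compat_r; lra).
  assert (bl * inner n (g xstar) w <= beta k * inner n (g xstar) w) by (apply Rmult_le_compat_r; lra).
  set (e := inner n (g (x k)) w - inner n (g xstar) w).
  assert (beta k * inner n (g (x k)) w = beta k * inner n (g xstar) w + beta k * e) by (unfold e; ring).
  assert (- (bu * Rabs e) <= beta k * e).
  { pose proof (Rabs_pos e). assert (beta k * Rabs e <= bu * Rabs e) by (apply Rmult_le_compat_r; lra).
    assert (- e <= Rabs e) by (rewrite <- Rabs_Ropp; apply Rle_abs).
    assert (beta k * (- e) <= beta k * Rabs e) by (apply Rmult_le_compat_l; lra). lra. }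
  lra.
Qed.

(* Along the subsequence the right-hand side of proj_ineq_iterate tends to 1 - <xstar, w>, which is
   the hypothesis of grad_nonpos_of_proj_ineq. *)
Lemma accumulation_grad_nonpos xstar : accumulation_point n x xstar ->
  Omega n xstar /\ forall i, (i < n)%nat -> g xstar i <= 0.
Proof.
  intros [phi [Hphi Hcv]].
  pose proof (fun j => iterates_in_hull (phi j)) as Hhull.
  assert (HKs : Omega_hull n xstar) by (apply (Omega_hull_closed n (fun j => x (phi j))); auto).
  assert (Hbox : forall j, in_box n (x (phi j))) by (intros; apply Omega_hull_box; auto).
  assert (Hboxs : in_box n xstar) by (apply Omega_hull_box; auto).
  assert (Hom : Omega n xstar).
  { split; [|apply HKs]. apply (UL_sequence (fun j => X (phi j))).
    - apply cv_inner_self; auto.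
    - apply cv_subseq; auto. apply norm_sq_cv1. }
  assert (Hqs : Txm m n B xstar <> 0) by (pose proof (HcBK xstar HKs); lra).
  split; auto.
  apply (grad_nonpos_of_proj_ineq n xstar (g xstar) bl); auto.
  { apply grad_orth; auto; lia. }
  { apply beta_lo_pos. }
  intros w Hw Hgw.
  set (Q := fun k => (X k + 1) / 2 + bu * Dk k - inner n (x k) w
                     + bu * Rabs (inner n (g (x k)) w - inner n (g xstar) w)).
  assert (HQcv : Un_cv (fun j => Q (phi j)) ((1 + 1) / 2 + bu * 0 - inner n xstar w + bu * 0)).
  { unfold Q. apply CV_plus; [apply CV_minus; [apply CV_plus|]|].
    - unfold Rdiv. apply CV_mult; [|apply cv_const].
      apply CV_plus; [|apply cv_const]. apply (cv_subseq X); auto. apply norm_sq_cv1.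
    - apply CV_mult; [apply cv_const|]. apply (cv_subseq Dk); auto. apply Dk_cv0.
    - apply cv_inner_l; auto.
    - apply CV_mult; [apply cv_const|].
      replace 0 with (Rabs (inner n (g xstar) w - inner n (g xstar) w))
        by (rewrite Rminus_diag_eq, Rabs_R0; auto).
      apply (continuity_seq Rabs); [apply Rcontinuity_abs|].
      apply CV_minus; [|apply cv_const].
      unfold inner. apply cv_sumR. intros i Hi. apply CV_mult; [|apply cv_const]. apply cv_grad; auto. }
  assert (bl * inner n (g xstar) w <= (1 + 1) / 2 + bu * 0 - inner n xstar w + bu * 0)
    by (apply (cv_ge_const _ _ _ HQcv); intros; apply proj_ineq_iterate; auto).
  lra.
Qed.

Lemma lam_iterates_cv : exists L, Un_cv (fun k => lamf (x k)) L /\ pareto_eigenvalue m n A B L.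
Proof.
  assert (Hgrow : Un_growing (fun k => lamf (x k))).
  { intros k. pose proof (lam_ascent k). destruct (iterate_step_facts k) as [_ [_ [_ HD]]].
    pose proof step_lower_pos. assert (0 <= rho * a * Dk k) by (apply Rmult_le_pos; nra). lra. }
  assert (Hub : has_ub (fun k => lamf (x k))).
  { exists (coef_norm n m A / cB). intros y [k Hk]. subst.
    pose proof (iterates_in_hull k) as Hk. apply lam_le; [apply Omega_hull_box, Hk | auto | apply HcBK, Hk]. }
  destruct (growing_cv _ Hgrow Hub) as [L HL].
  destruct (bolzano_weierstrass_box n x) with (k := n) as [phi [xstar [Hphi Hcv]]]; auto.
  { intros j i Hi. pose proof (iterates_in_hull j) as Hj.
    pose proof (Omega_hull_box n _ Hj i Hi). destruct Hj as [H0 _]. pose proof (H0 i Hi).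
    rewrite Rabs_pos_eq in H by auto. lra. }
  destruct (accumulation_grad_nonpos xstar) as [Hom Hg]; [exists phi; auto|].
  assert (Hqs : Txm m n B xstar <> 0) by (pose proof (HcBK xstar (Omega_in_hull n xstar Hom)); lra).
  assert (HL1 : Un_cv (fun j => lamf (x (phi j))) (lamf xstar)).
  { apply cv_lam; auto.
    - intros; apply Omega_hull_box, iterates_in_hull.
    - apply Omega_hull_box, Omega_in_hull; auto. }
  assert (HL2 : Un_cv (fun j => lamf (x (phi j))) L) by (apply (cv_subseq (fun k => lamf (x k))); auto).
  exists L. split; auto. exists xstar. rewrite (UL_sequence _ _ _ HL2 HL1).
  apply TEiCP_of_grad_nonpos; auto; [lia|]. pose proof (HcBK xstar (Omega_in_hull n xstar Hom)). lra.
Qed.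

End SPG1_run.

Theorem theorem1 :
  forall (m n : nat) (A B : tensor) (rho bmin bmax : R) (P : vec -> vec)
         (x : nat -> vec) (beta : nat -> R) (t : nat -> nat),
    (2 <= m)%nat ->
    symmetric_tensor m n A -> symmetric_tensor m n B -> pos_def m n B ->
    0 < rho < 1 -> 0 < bmin <= bmax ->
    is_proj n P ->
    SPG1_generated m n A B P rho bmin bmax x beta t ->
    (forall k,
        (forall j, (j < k)%nat -> ~ vzero n (direction m n A B P (x j) (beta j))) ->
        vzero n (direction m n A B P (x k) (beta k)) ->
        TEiCP m n A B (lam m n A B (x k)) (x k)) /\
    ((forall k, ~ vzero n (direction m n A B P (x k) (beta k))) ->
       (forall xstar, accumulation_point n x xstar ->
          constrained_stationary m n A B xstar /\
          TEiCP m n A B (lam m n A B xstar) xstar) /\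
       exists L, Un_cv (fun k => lam m n A B (x k)) L /\ pareto_eigenvalue m n A B L).
Proof.
  intros m n A B rho bmin bmax P x beta t Hm HA HB HBpd Hrho Hb HP Hgen.
  split.
  - intros k Hprev Hstop. exact (stop_TEiCP m n A B rho bmin bmax P x beta t Hm HBpd Hb HP Hgen k Hprev Hstop).
  - intros Hnz.
    destruct (pos_def_hull_lower_bound m n B HBpd) as [cB [HcB HcBK]].
    split.
    + intros xstar Hacc.
      destruct (accumulation_grad_nonpos m n A B rho bmin bmax cB P x beta t
                  Hm HA HB Hrho Hb HP HcB HcBK Hgen Hnz xstar Hacc) as [Hom Hg].
      assert (Hq : 0 < Txm m n B xstar) by (pose proof (HcBK xstar (Omega_in_hull n xstar Hom)); lra).
      split; [apply stationary_of_grad_nonpos | apply TEiCP_of_grad_nonpos]; auto; lia.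
    + exact (lam_iterates_cv m n A B rho bmin bmax cB P x beta t Hm HA HB Hrho Hb HP HcB HcBK Hgen Hnz).
Qed.
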